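(* Let $\bullet\in\{0,L_p,L,1_p,1\}$ and let $\mathsf{S}$ be a $\bullet$-continuous kinematic system. Let $\mathbf{x}_0\in X\setminus\mathrm{int}(\mathcal{G}^\bullet_\mathsf{S})$. If $\mathbf{J}\in C^1_{\mathbf{x}_0}(X,\mathbb{R}^{m\times n})$ and $\mathsf{D}\mathbf{J}\in C^{L_p}_{\mathbf{x}_0}$, then there exist $a\in\{1,\dots,m\}$ and $r,L\in(0,\infty)$ such that (i) $c_{aa}(\mathbf{x}_0)=0$; (ii) $c_{aa}\hat{\mathbf{j}}_a^T\in C^{1_p}_{\mathbf{x}_0+rB_X}(X,\mathbb{R}^n)$; (iii) $\|\mathbf{h}(\mathbf{x})\|\le L\|\mathbf{x}-\mathbf{x}_0\|^2$ for all $\mathbf{x}\in\mathbf{x}_0+rB_X$, where $\mathbf{h}(\mathbf{x})=(c_{aa}\hat{\mathbf{j}}_a^T)(\mathbf{x})-\mathsf{D}(c_{aa}\hat{\mathbf{j}}_a^T)(\mathbf{x}_0)(\mathbf{x}-\mathbf{x}_0)$.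
   Context: Kinematic system: $l\ge2$, $m_1,\dots,m_l\ge1$, $m=\sum m_a\le n$; $X=\mathbb{R}\times\mathbb{R}^n$, $B_X$ its closed unit ball; $\mathbf{F}=[\mathbf{f}_t\ \mathbf{F}_q]:X\to\mathbb{R}^{m\times(n+1)}$, $\mathbf{R}:X\to$ invertible $n\times n$ matrices, $\mathbf{r}:X\to\mathbb{R}^m$; it is $\bullet$-continuous if $\mathbf{F},\mathbf{R},\mathbf{r}\in C^\bullet$ on $X$. $\mathbf{J}=\mathbf{F}_q\mathbf{R}^{-1}$. Orthogonalization: pointwise Gram–Schmidt on rows $\mathbf{j}_i$ of $\mathbf{J}$: $\mathbf{v}_i=\mathbf{j}_i-\sum_{k<i,c_{kk}>0}\langle\hat{\mathbf{j}}_k,\mathbf{j}_i\rangle\hat{\mathbf{j}}_k$, $c_{ii}=\|\mathbf{v}_i\|$, $\hat{\mathbf{j}}_i=\mathbf{v}_i/c_{ii}$ if $c_{ii}>0$, $c_{ik}=\langle\hat{\mathbf{j}}_k,\mathbf{j}_i\rangle$ for $k<i$ with $c_{kk}>0$, else $c_{ik}=0$; the other rows complete an orthonormal basis of the null space of $\mathbf{J}$ (note $c_{ii}\hat{\mathbf{j}}_i=\mathbf{v}_i$ regardless of these choices). $\mathbf{C}=[c_{ik}]_{i,k\le m}$, with diagonal blocks $\mathbf{C}_{aa}\in\mathbb{R}^{m_a\times m_a}$ (task blocks of sizes $m_1,\dots,m_l$), and $\hat{\mathbf{J}}_a$ the rows of $\hat{\mathbf{J}}_e$ with indices in the $a$-th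 task block. $\mathcal{G}^\bullet_\mathsf{S}=\{\mathbf{x}\in X:\mathbf{C}_{aa}\hat{\mathbf{J}}_a\in C^\bullet_\mathbf{x}\ \forall a\}$. Regularity classes: $f\in C^\bullet_{x_0}$ means ($0$) continuous at $x_0$; ($L_p$) $\exists r>0,L\ge0$: $\|f(x)-f(x_0)\|\le L\|x-x_0\|$ for $\|x-x_0\|\le r$; ($L$) Lipschitz near $x_0$; ($1_p$) Fréchet differentiable at $x_0$; ($1$) differentiable near $x_0$ with derivative continuous at $x_0$; $C^\bullet_\Omega$ = $\bullet$-continuous at every point of $\Omega$. $\mathsf{D}$ denotes the derivative. *)

From Stdlib Require Import Reals List.
From mathcomp Require Import ssreflect ssrfun ssrbool eqtype ssrnat seq choice fintype bigop.
Set Implicit Arguments. Unset Strict Implicit. Unset Printing Implicit Defensive.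

Local Open Scope R_scope.

Definition rsum (I : finType) (f : I -> R) : R := \big[Rplus/R0]_(i : I) f i.
Definition dot (I : finType) (u v : I -> R) : R := rsum (fun i => u i * v i).
Definition norm (I : finType) (u : I -> R) : R := sqrt (dot u u).
Definition vsub (I : finType) (u v : I -> R) : I -> R := fun i => u i - v i.

(* the state space X = R x R^n, represented as R^(n+1) (index 0 = time t),
   with the Euclidean norm *)
Definition X (n : nat) := 'I_n.+1 -> R.

Definition lapply (D C : finType) (A : C -> D -> R) (h : D -> R) : C -> R :=
  fun c => rsum (fun d => A c d * h d).

Inductive reg_class := C0 | CLp | CL | C1p | C1.

Definition frechet (D C : finType) (f : (D -> R) -> (C -> R)) (x : D -> R)
    (A : C -> D -> R) : Prop :=
  forall eps, 0 < eps -> exists delta, 0 < delta /\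
    forall y, norm (vsub y x) < delta ->
      norm (vsub (vsub (f y) (f x)) (lapply A (vsub y x))) <= eps * norm (vsub y x).

Definition cont_at (D C : finType) (f : (D -> R) -> (C -> R)) (x0 : D -> R) : Prop :=
  forall eps, 0 < eps -> exists delta, 0 < delta /\
    forall x, norm (vsub x x0) < delta -> norm (vsub (f x) (f x0)) < eps.

Definition reg_at (cls : reg_class) (D C : finType) (f : (D -> R) -> (C -> R))
    (x0 : D -> R) : Prop :=
  match cls with
  | C0 => cont_at f x0
  | CLp => exists r L, 0 < r /\ 0 <= L /\
      forall x, norm (vsub x x0) <= r -> norm (vsub (f x) (f x0)) <= L * norm (vsub x x0)
  | CL => exists r L, 0 < r /\ 0 <= L /\
      forall x y, norm (vsub x x0) <= r -> norm (vsub y x0) <= r ->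
        norm (vsub (f x) (f y)) <= L * norm (vsub x y)
  | C1p => exists A, frechet f x0 A
  | C1 => exists r (Df : (D -> R) -> C -> D -> R), 0 < r /\
      (forall x, norm (vsub x x0) < r -> frechet f x (Df x)) /\
      cont_at (fun x (p : C * D) => Df x p.1 p.2) x0
  end.

(* matrix-valued maps are viewed as vector-valued maps on the product index *)
Definition uncurry_map (D A B : finType) (f : (D -> R) -> A -> B -> R) :
  (D -> R) -> (A * B)%type -> R := fun x p => f x p.1 p.2.

(* rows are given as  row : nat -> 'I_n -> R  (row i = j_i, 0-based).
   Convention: hat k := 0 whenever c_kk = 0. *)
Definition normalize n (v : 'I_n -> R) : 'I_n -> R :=
  if Rlt_dec 0 (norm v) then fun c => v c / norm v else fun _ => 0.

Definition gs_resid n (row : nat -> 'I_n -> R) (h : nat -> 'I_n -> R) (i : nat)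
  : 'I_n -> R :=
  fun c => row i c - \big[Rplus/R0]_(k < i) (dot (h k) (row i) * h k c).

Fixpoint gs_hats n (row : nat -> 'I_n -> R) (i : nat) : nat -> 'I_n -> R :=
  match i with
  | O => fun _ _ => 0
  | S i' => let h := gs_hats row i' in
            let v := normalize (gs_resid row h i') in
            fun k => if (k == i')%N then v else h k
  end.

Definition jhat n (row : nat -> 'I_n -> R) (k : nat) : 'I_n -> R :=
  gs_hats row k.+1 k.
Definition vGS n (row : nat -> 'I_n -> R) (i : nat) : 'I_n -> R :=
  gs_resid row (gs_hats row i) i.
Definition cGS n (row : nat -> 'I_n -> R) (i k : nat) : R :=
  if (k < i)%N then dot (jhat row k) (row i)
  else if (k == i)%N then norm (vGS row i) else 0.

(* rows of an m x n matrix, as a nat-indexed family (zero past m) *)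
Definition rows_of m n (M : 'I_m -> 'I_n -> R) : nat -> 'I_n -> R :=
  fun i => match (insub i : option 'I_m) with
           | Some o => M o
           | None => fun _ => 0
           end.

Definition Fq m n (F : X n -> 'I_m -> 'I_n.+1 -> R) : X n -> 'I_m -> 'I_n -> R :=
  fun x i j => F x i (lift ord0 j).

Definition matmul p q s (A : 'I_p -> 'I_q -> R) (B : 'I_q -> 'I_s -> R) :
  'I_p -> 'I_s -> R := fun i j => rsum (fun k => A i k * B k j).

Definition idm p : 'I_p -> 'I_p -> R := fun i j => if i == j then 1 else 0.
Arguments idm : clear implicits.

(* J = F_q R^{-1};  Rinv is the (unique) inverse of R *)
Definition Jmat m n (F : X n -> 'I_m -> 'I_n.+1 -> R) (Rinv : X n -> 'I_n -> 'I_n -> R)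
  : X n -> 'I_m -> 'I_n -> R := fun x => matmul (Fq F x) (Rinv x).

(* tasks: block sizes ms = [m_1; ...; m_l]; block a (0-based) starts at offset *)
Definition blk_off (ms : list nat) (a : nat) : nat := list_sum (firstn a ms).
Definition blk_size (ms : list nat) (a : nat) : nat := nth a ms 0%N.

(* x |-> C_aa \hat J_a, as an m_a x n matrix (flattened) *)
Definition CJ_block m n (ms : list nat) (J : X n -> 'I_m -> 'I_n -> R) (a : nat)
  : X n -> ('I_(blk_size ms a) * 'I_n)%type -> R :=
  fun x p =>
    let row := rows_of (J x) in
    let o := blk_off ms a in
    rsum (fun k : 'I_(blk_size ms a) =>
            cGS row (o + p.1) (o + k) * jhat row (o + k) p.2).
Arguments CJ_block {m n} ms J a _ _.

Definition inG (cls : reg_class) m n (ms : list nat) (J : X n -> 'I_m -> 'I_n -> R)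
  (x : X n) : Prop :=
  forall a, (a < length ms)%N -> reg_at cls (CJ_block ms J a) x.

Definition in_interior n (P : X n -> Prop) (x0 : X n) : Prop :=
  exists r, 0 < r /\ forall x, norm (vsub x x0) < r -> P x.

Definition kin_cont (cls : reg_class) m n (F : X n -> 'I_m -> 'I_n.+1 -> R)
  (Rm : X n -> 'I_n -> 'I_n -> R) (r : X n -> 'I_m -> R) : Prop :=
  forall x, reg_at cls (uncurry_map F) x /\ reg_at cls (uncurry_map Rm) x /\
            reg_at cls r x.

(* Write J = F_q R^{-1}, j_i for its rows and v_i = c_ii ĵ_i for the
   Gram–Schmidt residuals.  The proof rests on a quantitative regularity
   class [c1lp cf x0 r f]: the scalar map f is differentiable on the closed
   ball B(x0, r), f and its gradient are Lipschitz at the centre x0, and (when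
   [cf] holds, i.e. in class C^1) the gradient is continuous inside the ball.
   This class is stable under sums, products, finite sums and composition with
   sqrt and inversion away from 0; the hypotheses on J put every entry of J in
   it.  Gram–Schmidt is built from these operations, so as long as the pivots
   c_kk(x0), k < N, are positive, every v_k, ĵ_k and c_ik with k <= N is c1lp
   near x0.  Let a be the first index with c_aa(x0) = 0.
   - If a < m exists, (i) holds and c_aa ĵ_a = v_a is c1lp and vanishes at
     x0; the mean value inequality turns this into differentiability on a
     ball (ii) and the quadratic estimate (iii).
   - Otherwise every block C_aa Ĵ_a is c1lp near x0, hence of class • on a
     neighbourhood of x0, so x0 would be interior to G_S: a contradiction. *)

From HB Require Import structures.
From Pilot Require Import Defs.
From Stdlib Require Import Reals List Lra Psatz FunctionalExtensionality IndefiniteDescription Classical.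
From mathcomp Require Import ssreflect ssrfun ssrbool eqtype ssrnat seq choice fintype bigop.
Local Open Scope R_scope.
Set Implicit Arguments. Unset Strict Implicit.

Lemma Rplus_assoc' : associative Rplus. Proof. by move=> *; ring. Qed.
HB.instance Definition _ := Monoid.isComLaw.Build R R0 Rplus Rplus_assoc' Rplus_comm Rplus_0_l.
HB.instance Definition _ := Monoid.isMulLaw.Build R R0 Rmult Rmult_0_l Rmult_0_r.
HB.instance Definition _ := Monoid.isAddLaw.Build R Rmult Rplus Rmult_plus_distr_r Rmult_plus_distr_l.

Section FiniteSums.
Variable I : finType.
Implicit Types f g : I -> R.

Lemma rsum_ext f g : (forall i, f i = g i) -> rsum f = rsum g.
Proof. by move=> H; apply: eq_bigr => i _. Qed.

Lemma rsum_le f g : (forall i, f i <= g i) -> rsum f <= rsum g.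
Proof.
by move=> H; apply: (big_ind2 (fun a b => a <= b)) => // *; lra.
Qed.

Lemma rsum_ge0 f : (forall i, 0 <= f i) -> 0 <= rsum f.
Proof. by move=> H; apply: (big_ind (fun a => 0 <= a)) => // *; lra. Qed.

Lemma rsum_add f g : rsum (fun i => f i + g i) = rsum f + rsum g.
Proof. exact: big_split. Qed.

Lemma rsum_scal c f : rsum (fun i => c * f i) = c * rsum f.
Proof. by rewrite /rsum big_distrr. Qed.

Lemma rsum_scalr c f : rsum (fun i => f i * c) = rsum f * c.
Proof. by rewrite /rsum big_distrl. Qed.

Lemma rsum_sub f g : rsum (fun i => f i - g i) = rsum f - rsum g.
Proof.
rewrite (rsum_ext (g := fun i => f i + -1 * g i)) => [|i]; last ring.
by rewrite rsum_add rsum_scal; ring.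
Qed.

Lemma rsum0 : rsum (fun _ : I => 0) = 0.
Proof. exact: big1. Qed.

Lemma rsum_abs f : Rabs (rsum f) <= rsum (fun i => Rabs (f i)).
Proof.
apply: (big_ind2 (fun a b => Rabs a <= b)) => [|a b c d H1 H2|i _].
- by rewrite Rabs_R0; lra.
- by apply: Rle_trans (Rabs_triang _ _) _; lra.
- lra.
Qed.

Lemma rsum_nonneg_le f i : (forall j, 0 <= f j) -> f i <= rsum f.
Proof.
move=> H; rewrite /rsum (bigD1 i) //=.
have : 0 <= \big[Rplus/R0]_(j | j != i) f j.
  by apply: (big_ind (fun a => 0 <= a)) => // *; lra.
lra.
Qed.

Lemma rsum_const c : rsum (fun _ : I => c) = INR #|I| * c.
Proof.
rewrite /rsum big_const; elim: #|I| => [|k IH]; first by rewrite /=; ring.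
by rewrite S_INR [iter _ _ _]/= IH; ring.
Qed.

Lemma rsum_delta (i0 : I) f : rsum (fun j => if j == i0 then f j else 0) = f i0.
Proof.
rewrite /rsum (bigD1 i0) //= eqxx big1; first ring.
by move=> j /negbTE ->.
Qed.

End FiniteSums.

Lemma rsum_exchange (I J : finType) (F : I -> J -> R) :
  rsum (fun i => rsum (fun j => F i j)) = rsum (fun j => rsum (fun i => F i j)).
Proof. exact: exchange_big. Qed.

Section EuclideanNorm.
Variable I : finType.
Implicit Types u v w : I -> R.

Lemma dot_ge0 u : 0 <= dot u u.
Proof. by apply: rsum_ge0 => i; nra. Qed.

Lemma norm_ge0 u : 0 <= norm u.
Proof. exact: sqrt_pos. Qed.

Lemma norm_sq u : norm u * norm u = dot u u.
Proof. by rewrite /norm sqrt_sqrt //; apply: dot_ge0. Qed.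

Lemma norm_ext u v : (forall i, u i = v i) -> norm u = norm v.
Proof. by move=> H; rewrite /norm /dot; congr sqrt; apply: rsum_ext => i; rewrite H. Qed.

Lemma dot_lin u v (al be : R) w :
  dot (fun i => al * u i + be * v i) w = al * dot u w + be * dot v w.
Proof. by rewrite /dot -!rsum_scal -rsum_add; apply: rsum_ext => i; ring. Qed.

Lemma dot_zero w : dot (fun _ : I => 0) w = 0.
Proof. by rewrite /dot (rsum_ext (g := fun _ => 0)) ?rsum0 // => i; ring. Qed.

Lemma dot_zero_r u : dot u (fun _ => 0) = 0.
Proof. by rewrite /dot (rsum_ext (g := fun _ => 0)) ?rsum0 // => i; ring. Qed.

Lemma norm_zero : norm (fun _ : I => 0) = 0.
Proof. by rewrite /norm dot_zero sqrt_0. Qed.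

Lemma norm_self u : norm (vsub u u) = 0.
Proof. by rewrite -norm_zero; apply: norm_ext => i; rewrite /vsub; ring. Qed.

Lemma comp_le_norm u i : Rabs (u i) <= norm u.
Proof.
rewrite /norm -sqrt_Rsqr_abs; apply: sqrt_le_1_alt.
by rewrite /Rsqr /dot; apply: rsum_nonneg_le => j; nra.
Qed.

Lemma norm_le_sum_abs u : norm u <= rsum (fun i => Rabs (u i)).
Proof.
set S := rsum _.
have HS : 0 <= S by apply: rsum_ge0 => i; apply: Rabs_pos.
rewrite /norm -(sqrt_square S) //; apply: sqrt_le_1_alt.
rewrite /dot -rsum_scalr; apply: rsum_le => i.
have := @rsum_nonneg_le _ (fun j => Rabs (u j)) i (fun j => Rabs_pos _).
rewrite -/S => H.
have : u i * u i = Rabs (u i) * Rabs (u i) by rewrite -Rabs_mult Rabs_right; nra.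
have := Rabs_pos (u i); nra.
Qed.

Lemma norm_le_comp_bound u e : (forall i, Rabs (u i) <= e) -> norm u <= INR #|I| * e.
Proof.
by move=> H; apply: Rle_trans (norm_le_sum_abs u) _; rewrite -rsum_const; apply: rsum_le.
Qed.

Lemma abs_dot_le u v : Rabs (dot u v) <= rsum (fun i => Rabs (u i)) * norm v.
Proof.
apply: Rle_trans (rsum_abs _) _; rewrite -rsum_scalr; apply: rsum_le => i.
by rewrite Rabs_mult; apply: Rmult_le_compat_l; [apply: Rabs_pos | apply: comp_le_norm].
Qed.

Lemma norm_scal c u : norm (fun i => c * u i) = Rabs c * norm u.
Proof.
rewrite /norm -sqrt_Rsqr_abs -sqrt_mult; try (apply: Rle_0_sqr || apply: dot_ge0).
by congr sqrt; rewrite /dot -rsum_scal; apply: rsum_ext => i; rewrite /Rsqr; ring.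
Qed.

Lemma norm_vsub_sym u v : norm (vsub u v) = norm (vsub v u).
Proof.
rewrite (@norm_ext (vsub u v) (fun i => -1 * vsub v u i)); last by move=> i; rewrite /vsub; ring.
by rewrite norm_scal Rabs_Ropp Rabs_R1; ring.
Qed.

Lemma norm_unit (i0 : I) t : norm (fun j => if j == i0 then t else 0) = Rabs t.
Proof.
rewrite /norm /dot (rsum_ext (g := fun j => if j == i0 then t * t else 0)).
  by rewrite rsum_delta sqrt_Rsqr_abs.
by move=> j; case: (j == i0); ring.
Qed.

(* The Cauchy–Schwarz inequality, via the discriminant of t |-> |u + t v|^2. *)
Lemma dot_expand u v t :
  dot (fun i => u i + t * v i) (fun i => u i + t * v i) =
  dot u u + 2 * t * dot u v + t * t * dot v v.
Proof.
rewrite /dot (rsum_ext (g := fun i => u i * u i + ((2 * t) * (u i * v i) + (t * t) * (v i * v i)))).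
  by rewrite !rsum_add !rsum_scal; ring.
by move=> i; ring.
Qed.

Lemma cauchy_schwarz_sq u v : dot u v * dot u v <= dot u u * dot v v.
Proof.
have Hq t : 0 <= dot u u + 2 * t * dot u v + t * t * dot v v.
  by rewrite -dot_expand; apply: dot_ge0.
have Hu := dot_ge0 u; have Hv := dot_ge0 v.
case: (Req_dec (dot v v) 0) => Hc.
- rewrite Hc in Hq; case: (Req_dec (dot u v) 0) => Hb; first by rewrite Hb; nra.
  have := Hq (- (dot u u + 1) / (2 * dot u v)).
  have -> : dot u u + 2 * (- (dot u u + 1) / (2 * dot u v)) * dot u v +
     (- (dot u u + 1) / (2 * dot u v)) * (- (dot u u + 1) / (2 * dot u v)) * 0 = -1.
    by field.
  lra.
- have := Hq (- dot u v / dot v v).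
  have -> : dot u u + 2 * (- dot u v / dot v v) * dot u v +
    (- dot u v / dot v v) * (- dot u v / dot v v) * dot v v =
    (dot u u * dot v v - dot u v * dot u v) / dot v v by field.
  move=> H.
  have : 0 <= (dot u u * dot v v - dot u v * dot u v) / dot v v * dot v v by nra.
  have -> : (dot u u * dot v v - dot u v * dot u v) / dot v v * dot v v =
     dot u u * dot v v - dot u v * dot u v by field.
  lra.
Qed.

Lemma cauchy_schwarz u v : Rabs (dot u v) <= norm u * norm v.
Proof.
apply: Rsqr_incr_0_var; last by apply: Rmult_le_pos; apply: norm_ge0.
rewrite /Rsqr -Rabs_mult Rabs_right; last nra.
have -> : norm u * norm v * (norm u * norm v) = (norm u * norm u) * (norm v * norm v) by ring.
by rewrite !norm_sq; apply: cauchy_schwarz_sq.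
Qed.

Lemma norm_triang u v : norm (fun i => u i + v i) <= norm u + norm v.
Proof.
have H1 := norm_ge0 u; have H2 := norm_ge0 v.
apply: Rsqr_incr_0_var; last lra.
rewrite /Rsqr norm_sq.
rewrite (_ : dot _ _ = dot (fun i => u i + 1 * v i) (fun i => u i + 1 * v i)); last first.
  by apply: rsum_ext => i; ring.
rewrite dot_expand.
have := cauchy_schwarz u v; have := Rle_abs (dot u v).
have := norm_sq u; have := norm_sq v; nra.
Qed.

Lemma norm_vsub_triang u v w : norm (vsub u w) <= norm (vsub u v) + norm (vsub v w).
Proof.
rewrite (@norm_ext (vsub u w) (fun i => vsub u v i + vsub v w i)); last by move=> i; rewrite /vsub; ring.
exact: norm_triang.
Qed.

End EuclideanNorm.

Lemma shrink_pos B eps : 0 <= B -> 0 < eps -> 0 < eps / (B + 1) /\ eps / (B + 1) * B < eps.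
Proof.
move=> HB He; split; first by apply: Rdiv_lt_0_compat; lra.
have -> : eps / (B + 1) * B = eps - eps / (B + 1) by field; lra.
have : 0 < eps / (B + 1) by apply: Rdiv_lt_0_compat; lra.
lra.
Qed.

Lemma mul_bound a b A B : Rabs a <= A -> Rabs b <= B -> Rabs (a * b) <= A * B.
Proof. by move=> Ha Hb; rewrite Rabs_mult; apply: Rmult_le_compat => //; apply: Rabs_pos. Qed.

Section ScalarCalculus.
Variable D : finType.
Notation V := (D -> R).
Implicit Types (f g : V -> R) (x y : V) (a b : V).

Definition has_grad f x a := forall eps, 0 < eps -> exists delta, 0 < delta /\
  forall y, norm (vsub y x) < delta ->
    Rabs (f y - f x - dot a (vsub y x)) <= eps * norm (vsub y x).

Definition scont f x := forall eps, 0 < eps -> exists delta, 0 < delta /\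
  forall y, norm (vsub y x) < delta -> Rabs (f y - f x) < eps.

Lemma has_grad_ext f g x a b : (forall y, f y = g y) -> (forall d, a d = b d) ->
  has_grad f x a -> has_grad g x b.
Proof.
move=> Hfg Hab H eps He; have [d [Hd Hy]] := H eps He; exists d; split => // y Hyx.
rewrite -!Hfg (_ : dot b _ = dot a (vsub y x)); first exact: Hy.
by apply: rsum_ext => i; rewrite Hab.
Qed.

Lemma has_grad_ext_loc f g x a d : 0 < d ->
  (forall y, norm (vsub y x) < d -> f y = g y) -> has_grad f x a -> has_grad g x a.
Proof.
move=> Hd E H eps He; have [d1 [Hd1 H1]] := H eps He.
exists (Rmin d d1); split; first exact: Rmin_pos.
move=> y Hy; rewrite -E; last exact: Rlt_le_trans Hy (Rmin_l _ _).
rewrite -(E x); last by rewrite norm_self.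
by apply: H1; apply: Rlt_le_trans Hy (Rmin_r _ _).
Qed.

Lemma scont_ext_loc f g y d : 0 < d ->
  (forall z, norm (vsub z y) < d -> f z = g z) -> scont g y -> scont f y.
Proof.
move=> Hd E H eps He; have [d1 [Hd1 H1]] := H eps He.
exists (Rmin d d1); split; first exact: Rmin_pos.
move=> z Hz; rewrite E; last exact: Rlt_le_trans Hz (Rmin_l _ _).
rewrite E; last by rewrite norm_self.
by apply: H1; apply: Rlt_le_trans Hz (Rmin_r _ _).
Qed.

Lemma has_grad_loclip f x a : has_grad f x a -> exists delta K, 0 < delta /\ 0 <= K /\
  forall y, norm (vsub y x) < delta -> Rabs (f y - f x) <= K * norm (vsub y x).
Proof.
move=> H; have [d [Hd Hy]] := H 1 Rlt_0_1.
exists d, (1 + rsum (fun i => Rabs (a i))); split => //.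
have := rsum_ge0 (fun i => Rabs_pos (a i)); split; first lra.
move=> y Hyx; have := Hy y Hyx; have := abs_dot_le a (vsub y x).
have := Rabs_triang (f y - f x - dot a (vsub y x)) (dot a (vsub y x)).
rewrite (_ : f y - f x - dot a (vsub y x) + dot a (vsub y x) = f y - f x); last ring.
lra.
Qed.

Lemma has_grad_cont f x a : has_grad f x a -> scont f x.
Proof.
move=> /has_grad_loclip [d [K [Hd [HK H]]]] eps Heps.
have [He1 He2] := shrink_pos HK Heps.
exists (Rmin d (eps / (K + 1))); split; first exact: Rmin_pos.
move=> y Hy; have Hy1 := Rlt_le_trans _ _ _ Hy (Rmin_l _ _).
have Hy2 := Rlt_le_trans _ _ _ Hy (Rmin_r _ _).
apply: Rle_lt_trans (H y Hy1) _.
have Hn := norm_ge0 (vsub y x).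
have := Rmult_le_compat_l K _ _ HK (Rlt_le _ _ Hy2); nra.
Qed.

Lemma has_grad_const c x : has_grad (fun _ => c) x (fun _ => 0).
Proof.
move=> eps He; exists 1; split => [|y _]; first lra.
rewrite dot_zero (_ : c - c - 0 = 0); last ring.
by rewrite Rabs_R0; have := norm_ge0 (vsub y x); nra.
Qed.

Lemma has_grad_lin a x0 x : has_grad (fun y => dot a (vsub y x0)) x a.
Proof.
move=> eps He; exists 1; split => [|y _]; first lra.
have -> : dot a (vsub y x0) - dot a (vsub x x0) - dot a (vsub y x) = 0.
  by rewrite /dot -!rsum_sub (rsum_ext (g := fun _ => 0)) ?rsum0 // => i; rewrite /vsub; ring.
by rewrite Rabs_R0; have := norm_ge0 (vsub y x); nra.
Qed.

Lemma has_grad_add f g x a b : has_grad f x a -> has_grad g x b ->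
  has_grad (fun y => f y + g y) x (fun d => a d + b d).
Proof.
move=> Hf Hg eps He.
have [d1 [Hd1 H1]] := Hf (eps / 2) ltac:(lra).
have [d2 [Hd2 H2]] := Hg (eps / 2) ltac:(lra).
exists (Rmin d1 d2); split; first exact: Rmin_pos.
move=> y Hy.
have := H1 y (Rlt_le_trans _ _ _ Hy (Rmin_l _ _)).
have := H2 y (Rlt_le_trans _ _ _ Hy (Rmin_r _ _)).
rewrite (_ : (fun d => a d + b d) = (fun d => 1 * a d + 1 * b d)); last first.
  by apply: functional_extensionality => i; ring.
rewrite dot_lin.
set u := f y - f x - dot a (vsub y x); set w := g y - g x - dot b (vsub y x).
rewrite (_ : f y + g y - (f x + g x) - (1 * dot a (vsub y x) + 1 * dot b (vsub y x)) = u + w);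
  last by rewrite /u /w; ring.
have := Rabs_triang u w; lra.
Qed.

Lemma has_grad_scal c f x a : has_grad f x a -> has_grad (fun y => c * f y) x (fun d => c * a d).
Proof.
move=> Hf eps He.
have [He1 He2] := shrink_pos (Rabs_pos c) He.
have [d1 [Hd1 H1]] := Hf _ He1.
exists d1; split => // y Hy.
rewrite (_ : (fun d => c * a d) = (fun d => c * a d + 0 * a d)); last first.
  by apply: functional_extensionality => i; ring.
rewrite dot_lin (_ : c * f y - c * f x - (c * dot a (vsub y x) + 0 * dot a (vsub y x)) =
  c * (f y - f x - dot a (vsub y x))); last ring.
rewrite Rabs_mult; have := H1 y Hy; have := Rabs_pos c; have := norm_ge0 (vsub y x).
have := Rabs_pos (f y - f x - dot a (vsub y x)); nra.
Qed.

Lemma has_grad_mul f g x a b : has_grad f x a -> has_grad g x b ->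
  has_grad (fun y => f y * g y) x (fun d => f x * b d + g x * a d).
Proof.
move=> Hf Hg eps He.
have He3 : 0 < eps / 3 by lra.
have [d0 [K [Hd0 [HK HL]]]] := has_grad_loclip Hf.
have [He1 Hb1] := shrink_pos (Rabs_pos (g x)) He3.
have [He2 Hb2] := shrink_pos (Rabs_pos (f x)) He3.
have [He4 Hb4] := shrink_pos HK He3.
have [d1 [Hd1 H1]] := Hf _ He1.
have [d2 [Hd2 H2]] := Hg _ He2.
have [d3 [Hd3 H3]] := has_grad_cont Hg He4.
exists (Rmin d0 (Rmin d1 (Rmin d2 d3))); split; first by repeat apply: Rmin_pos.
move=> y Hy.
have Hy0 := Rlt_le_trans _ _ _ Hy (Rmin_l _ _).
have Hy' := Rlt_le_trans _ _ _ Hy (Rmin_r _ _).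
have Hy1 := Rlt_le_trans _ _ _ Hy' (Rmin_l _ _).
have Hy'' := Rlt_le_trans _ _ _ Hy' (Rmin_r _ _).
have Hy2 := Rlt_le_trans _ _ _ Hy'' (Rmin_l _ _).
have Hy3 := Rlt_le_trans _ _ _ Hy'' (Rmin_r _ _).
rewrite dot_lin; set h := vsub y x.
set u := f y - f x - dot a h; set w := g y - g x - dot b h.
rewrite (_ : f y * g y - f x * g x - (f x * dot b h + g x * dot a h) =
   u * g x + f x * w + (f y - f x) * (g y - g x)); last by rewrite /u /w; ring.
have Hu := H1 y Hy1; have Hw := H2 y Hy2; have Hl := HL y Hy0; have Hc := H3 y Hy3.
rewrite -/h in Hu Hw Hl; rewrite -/u in Hu; rewrite -/w in Hw.
have Hn := norm_ge0 h.
have T1 := mul_bound Hu (Rle_refl (Rabs (g x))).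
have T2 := mul_bound (Rle_refl (Rabs (f x))) Hw.
have T3 := mul_bound Hl (Rlt_le _ _ Hc).
have := Rmult_le_compat_r _ _ _ Hn (Rlt_le _ _ Hb1); have := Rmult_le_compat_r _ _ _ Hn (Rlt_le _ _ Hb2).
have := Rmult_le_compat_r _ _ _ Hn (Rlt_le _ _ Hb4).
have := Rabs_triang (u * g x + f x * w) ((f y - f x) * (g y - g x)).
have := Rabs_triang (u * g x) (f x * w).
nra.
Qed.

Lemma has_grad_comp1 (phi : R -> R) phi' f x a :
  derivable_pt_lim phi (f x) phi' -> has_grad f x a ->
  has_grad (fun y => phi (f y)) x (fun d => phi' * a d).
Proof.
move=> Hp Hf eps He.
have He2 : 0 < eps / 2 by lra.
have [d0 [K [Hd0 [HK HL]]]] := has_grad_loclip Hf.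
have [He1 Hb1] := shrink_pos HK He2.
have [He3 Hb3] := shrink_pos (Rabs_pos phi') He2.
have [d1 Hd1] := Hp _ He1.
have [d2 [Hd2 H2]] := Hf _ He3.
have [d3 [Hd3 H3]] := has_grad_cont Hf (cond_pos d1).
exists (Rmin d0 (Rmin d2 d3)); split; first by repeat apply: Rmin_pos.
move=> y Hy.
have Hy0 := Rlt_le_trans _ _ _ Hy (Rmin_l _ _).
have Hy' := Rlt_le_trans _ _ _ Hy (Rmin_r _ _).
have Hy2 := Rlt_le_trans _ _ _ Hy' (Rmin_l _ _).
have Hy3 := Rlt_le_trans _ _ _ Hy' (Rmin_r _ _).
set h := vsub y x; set k := f y - f x.
rewrite (_ : (fun d => phi' * a d) = (fun d => phi' * a d + 0 * a d)); last first.
  by apply: functional_extensionality => i; ring.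
rewrite dot_lin Rmult_0_l Rplus_0_r.
have Hn := norm_ge0 h.
have Hk : Rabs k <= K * norm h by apply: HL.
have Hw := H2 y Hy2; rewrite -/h -/k in Hw.
have T1 : Rabs (phi (f y) - phi (f x) - phi' * k) <= eps / 2 / (K + 1) * Rabs k.
  case: (Req_dec k 0) => Hk0.
    have -> : f y = f x by rewrite /k in Hk0; lra.
    rewrite Hk0 Rmult_0_r !Rminus_diag Rabs_R0; lra.
  have := Hd1 k Hk0 (H3 y Hy3).
  rewrite (_ : f x + k = f y); last by rewrite /k; ring.
  rewrite (_ : phi (f y) - phi (f x) - phi' * k = ((phi (f y) - phi (f x)) / k - phi') * k);
    last by field.
  by rewrite Rabs_mult => Hq; apply: Rmult_le_compat_r; [apply: Rabs_pos | lra].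
have T2 := mul_bound (Rle_refl (Rabs phi')) Hw.
rewrite (_ : phi (f y) - phi (f x) - phi' * dot a h =
   (phi (f y) - phi (f x) - phi' * k) + phi' * (k - dot a h)); last ring.
have := Rabs_triang (phi (f y) - phi (f x) - phi' * k) (phi' * (k - dot a h)).
have := Rmult_le_compat_l _ _ _ (Rlt_le _ _ He1) Hk.
have := Rmult_le_compat_r _ _ _ Hn (Rlt_le _ _ Hb1); have := Rmult_le_compat_r _ _ _ Hn (Rlt_le _ _ Hb3).
nra.
Qed.

Lemma has_grad_big (T : Type) (s : seq T) (P : pred T) (F : T -> V -> R) (G : T -> V) x :
  (forall i, P i -> has_grad (F i) x (G i)) ->
  has_grad (fun y => \big[Rplus/R0]_(i <- s | P i) F i y) x
        (fun d => \big[Rplus/R0]_(i <- s | P i) G i d).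
Proof.
move=> H; elim: s => [|i s IH].
  by apply: (has_grad_ext (f := fun _ => 0) (a := fun _ => 0)) (has_grad_const 0 x) => ?;
    rewrite big_nil.
have E1 y : \big[Rplus/R0]_(j <- i :: s | P j) F j y =
  (if P i then F i y else 0) + \big[Rplus/R0]_(j <- s | P j) F j y.
  by rewrite big_cons; case: (P i) => //; ring.
have E2 d : \big[Rplus/R0]_(j <- i :: s | P j) G j d =
  (if P i then G i d else 0) + \big[Rplus/R0]_(j <- s | P j) G j d.
  by rewrite big_cons; case: (P i) => //; ring.
apply: (has_grad_ext (fun y => esym (E1 y)) (fun d => esym (E2 d))).
apply: has_grad_add => //; case HP : (P i); [exact: H | exact: has_grad_const].
Qed.

(* A gradient is unique: test both expansions along a coordinate direction. *)
Lemma has_grad_unique f x a b : has_grad f x a -> has_grad f x b -> forall d, a d = b d.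
Proof.
move=> Ha Hb d; apply: Rminus_diag_uniq.
suff H : forall eps, 0 < eps -> Rabs (a d - b d) <= 2 * eps.
  case: (Req_dec (a d - b d) 0) => // Hne.
  have Hlt := Rabs_pos_lt _ Hne.
  have := H (Rabs (a d - b d) / 4) ltac:(lra); lra.
move=> eps He.
have [d1 [Hd1 H1]] := Ha eps He; have [d2 [Hd2 H2]] := Hb eps He.
set t := Rmin d1 d2 / 2.
have Ht : 0 < t by rewrite /t; have := Rmin_pos _ _ Hd1 Hd2; lra.
set y := fun j => x j + (if j == d then t else 0).
have Hy : norm (vsub y x) = t.
  rewrite (@norm_ext _ _ (fun j => if j == d then t else 0)); last by move=> j; rewrite /vsub /y; ring.
  by rewrite norm_unit Rabs_right //; lra.
have Hlt : norm (vsub y x) < d1 /\ norm (vsub y x) < d2.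
  by rewrite Hy /t; have := Rmin_l d1 d2; have := Rmin_r d1 d2; lra.
have Edot (u : V) : dot u (vsub y x) = t * u d.
  rewrite /dot (rsum_ext (g := fun j => if j == d then t * u d else 0)) ?rsum_delta //.
  by move=> j; rewrite /vsub /y; case: eqP => [->|_]; ring.
have := H1 y (proj1 Hlt); have := H2 y (proj2 Hlt); rewrite Hy !Edot => A2 A1.
have : Rabs (t * (a d - b d)) <= 2 * eps * t.
  rewrite (_ : t * (a d - b d) = - (f y - f x - t * a d) + (f y - f x - t * b d)); last ring.
  by apply: Rle_trans (Rabs_triang _ _) _; rewrite Rabs_Ropp; lra.
rewrite Rabs_mult Rabs_right; last lra.
by move=> H; apply: (Rmult_le_reg_l t) => //; lra.
Qed.

Lemma scont_const c x : scont (fun _ => c) x.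
Proof. by move=> eps He; exists 1; split => [|y _]; rewrite ?Rminus_diag ?Rabs_R0; lra. Qed.

Lemma scont_add f g x : scont f x -> scont g x -> scont (fun y => f y + g y) x.
Proof.
move=> Hf Hg eps He.
have [d1 [Hd1 H1]] := Hf (eps / 2) ltac:(lra).
have [d2 [Hd2 H2]] := Hg (eps / 2) ltac:(lra).
exists (Rmin d1 d2); split; first exact: Rmin_pos.
move=> y Hy.
have := H1 y (Rlt_le_trans _ _ _ Hy (Rmin_l _ _)).
have := H2 y (Rlt_le_trans _ _ _ Hy (Rmin_r _ _)).
have := Rabs_triang (f y - f x) (g y - g x).
rewrite (_ : f y - f x + (g y - g x) = f y + g y - (f x + g x)); last ring.
lra.
Qed.

Lemma scont_mul f g x : scont f x -> scont g x -> scont (fun y => f y * g y) x.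
Proof.
move=> Hf Hg eps He.
set B := Rabs (f x) + Rabs (g x) + 1.
have HB : 0 < B by rewrite /B; have := Rabs_pos (f x); have := Rabs_pos (g x); lra.
set e := Rmin 1 (eps / (2 * B)).
have He' : 0 < e by apply: Rmin_pos; [lra | apply: Rdiv_lt_0_compat; lra].
have He1 : e <= 1 by apply: Rmin_l.
have He2 : e * B <= eps / 2.
  have -> : eps / 2 = (eps / (2 * B)) * B by field; lra.
  by apply: Rmult_le_compat_r; [lra | apply: Rmin_r].
have [d1 [Hd1 H1]] := Hf e He'.
have [d2 [Hd2 H2]] := Hg e He'.
exists (Rmin d1 d2); split; first exact: Rmin_pos.
move=> y Hy.
have A1 := Rlt_le _ _ (H1 y (Rlt_le_trans _ _ _ Hy (Rmin_l _ _))).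
have A2 := Rlt_le _ _ (H2 y (Rlt_le_trans _ _ _ Hy (Rmin_r _ _))).
rewrite (_ : f y * g y - f x * g x =
  (f y - f x) * (g y - g x) + f x * (g y - g x) + g x * (f y - f x)); last ring.
have T1 := mul_bound A1 A2.
have T2 := mul_bound (Rle_refl (Rabs (f x))) A2.
have T3 := mul_bound (Rle_refl (Rabs (g x))) A1.
have := Rabs_triang ((f y - f x) * (g y - g x) + f x * (g y - g x)) (g x * (f y - f x)).
have := Rabs_triang ((f y - f x) * (g y - g x)) (f x * (g y - g x)).
rewrite /B in HB He2.
have := Rabs_pos (f x); have := Rabs_pos (g x); nra.
Qed.

Lemma scont_comp_lip (phi : R -> R) f x L : 0 <= L ->
  (exists d0, 0 < d0 /\ forall y, norm (vsub y x) < d0 ->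
     Rabs (phi (f y) - phi (f x)) <= L * Rabs (f y - f x)) ->
  scont f x -> scont (fun y => phi (f y)) x.
Proof.
move=> HL [d0 [Hd0 Hphi]] Hf eps He.
have [He1 Hb1] := shrink_pos HL He.
have [d1 [Hd1 H1]] := Hf _ He1.
exists (Rmin d0 d1); split; first exact: Rmin_pos.
move=> y Hy.
apply: Rle_lt_trans (Hphi y (Rlt_le_trans _ _ _ Hy (Rmin_l _ _))) _.
have := H1 y (Rlt_le_trans _ _ _ Hy (Rmin_r _ _)).
have := Rabs_pos (f y - f x); nra.
Qed.

Lemma scont_big (T : Type) (s : seq T) (P : pred T) (F : T -> V -> R) x :
  (forall i, P i -> scont (F i) x) ->
  scont (fun y => \big[Rplus/R0]_(i <- s | P i) F i y) x.
Proof.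
move=> H; elim: s => [|i s IH].
  by rewrite (_ : (fun _ => _) = fun _ => 0); [apply: scont_const |
    apply: functional_extensionality => y; rewrite big_nil].
rewrite (_ : (fun y => _) = fun y => (if P i then F i y else 0) +
   \big[Rplus/R0]_(j <- s | P j) F j y); last first.
  by apply: functional_extensionality => y; rewrite big_cons; case: (P i) => //; ring.
apply: scont_add => //; case HP : (P i); [exact: H | exact: scont_const].
Qed.

End ScalarCalculus.

Section MeanValue.
Variable D : finType.
Notation V := (D -> R).
Implicit Types (f : V -> R) (x y z : V).

Definition seg x y (t : R) : V := fun i => x i + t * (y i - x i).

Lemma seg0 x y : seg x y 0 = x.
Proof. by apply: functional_extensionality => i; rewrite /seg; ring. Qed.

Lemma seg1 x y : seg x y 1 = y.
Proof. by apply: functional_extensionality => i; rewrite /seg; ring. Qed.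

Lemma seg_diff x y t s : norm (vsub (seg x y s) (seg x y t)) = Rabs (s - t) * norm (vsub y x).
Proof. by rewrite -norm_scal; apply: norm_ext => i; rewrite /seg /vsub; ring. Qed.

Lemma seg_dist x y t : norm (vsub (seg x y t) x) = Rabs t * norm (vsub y x).
Proof. by rewrite -norm_scal; apply: norm_ext => i; rewrite /seg /vsub; ring. Qed.

Lemma seg_conv x y z t : 0 <= t <= 1 ->
  norm (vsub (seg y z t) x) <= (1 - t) * norm (vsub y x) + t * norm (vsub z x).
Proof.
move=> Ht.
rewrite (@norm_ext _ _ (fun i => (1 - t) * vsub y x i + t * vsub z x i)); last first.
  by move=> i; rewrite /seg /vsub; ring.
by apply: Rle_trans (norm_triang _ _) _; rewrite !norm_scal !Rabs_right; lra.
Qed.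

Lemma seg_in_ball x y t : 0 <= t <= 1 -> norm (vsub (seg x y t) x) <= norm (vsub y x).
Proof.
move=> Ht; rewrite seg_dist Rabs_right; last lra.
by have := norm_ge0 (vsub y x); nra.
Qed.

Lemma deriv_seg f x y t G : has_grad f (seg x y t) G ->
  derivable_pt_lim (fun s => f (seg x y s)) t (dot G (vsub y x)).
Proof.
move=> H eps He.
have HN := norm_ge0 (vsub y x); set N := norm (vsub y x) in HN *.
have He2 : 0 < eps / 2 by lra.
have [He1 Hb1] := shrink_pos HN He2.
have [d [Hd Hy]] := H _ He1.
have [Hdp _] := shrink_pos HN Hd.
exists (mkposreal _ Hdp) => h Hh0 /= Hh.
have Hha : 0 < Rabs h by apply: Rabs_pos_lt.
have Hs : norm (vsub (seg x y (t + h)) (seg x y t)) < d.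
  rewrite seg_diff -/N (_ : t + h - t = h); last ring.
  apply: (Rle_lt_trans _ (Rabs h * (N + 1))); first by apply: Rmult_le_compat_l; lra.
  have -> : d = d / (N + 1) * (N + 1) by field; lra.
  by apply: Rmult_lt_compat_r => //; lra.
have := Hy _ Hs; rewrite seg_diff (_ : t + h - t = h); last ring.
have -> : dot G (vsub (seg x y (t + h)) (seg x y t)) = h * dot G (vsub y x).
  by rewrite /dot -rsum_scal; apply: rsum_ext => i; rewrite /vsub /seg; ring.
move=> Hb.
have -> : (f (seg x y (t + h)) - f (seg x y t)) / h - dot G (vsub y x) =
   (f (seg x y (t + h)) - f (seg x y t) - h * dot G (vsub y x)) / h by field.
rewrite /Rdiv Rabs_mult Rabs_inv.
apply: (Rmult_lt_reg_r (Rabs h)) => //.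
rewrite Rmult_assoc Rinv_l; last lra.
rewrite Rmult_1_r; apply: Rle_lt_trans Hb _.
rewrite -/N; nra.
Qed.

Lemma mvt_seg f x y (G : V -> V) M :
  (forall t, 0 <= t <= 1 -> has_grad f (seg x y t) (G (seg x y t))) ->
  (forall t, 0 <= t <= 1 -> Rabs (dot (G (seg x y t)) (vsub y x)) <= M) ->
  Rabs (f y - f x) <= M.
Proof.
move=> Hd HM.
have [c [Hc Hc']] := MVT_cor2 (fun s => f (seg x y s))
  (fun s => dot (G (seg x y s)) (vsub y x)) 0 1 Rlt_0_1 (fun c Hc => deriv_seg (Hd c Hc)).
move: Hc; rewrite seg1 seg0 (_ : 1 - 0 = 1); last ring.
by rewrite Rmult_1_r => ->; apply: HM; lra.
Qed.

End MeanValue.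

Section Componentwise.
Variables D C : finType.
Notation V := (D -> R).

Lemma fin_small (P : C -> R -> Prop) :
  (forall c, exists d, 0 < d /\ forall d', 0 < d' -> d' <= d -> P c d') ->
  exists d, 0 < d /\ forall c, P c d.
Proof.
move=> H.
suff [d [Hd Hs]] : exists d, 0 < d /\
  forall c, c \in enum C -> forall d', 0 < d' -> d' <= d -> P c d'.
  by exists d; split => // c; apply: Hs; rewrite ?mem_enum //; lra.
elim: (enum C) => [|c s [d [Hd Hs]]]; first by exists 1; split => //; lra.
have [dc [Hdc Hc]] := H c.
exists (Rmin d dc); split; first exact: Rmin_pos.
move=> c'; rewrite in_cons => /orP [/eqP -> | Hin] d' Hd' Hle.
- by apply: Hc => //; apply: Rle_trans Hle (Rmin_r _ _).
- by apply: Hs => //; apply: Rle_trans Hle (Rmin_l _ _).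
Qed.

Lemma frechet_comp (f : V -> C -> R) x A :
  frechet f x A -> forall c, has_grad (fun y => f y c) x (A c).
Proof.
move=> H c eps He; have [d [Hd Hy]] := H eps He; exists d; split => // y Hyx.
apply: Rle_trans _ (Hy y Hyx).
by have := comp_le_norm (vsub (vsub (f y) (f x)) (lapply A (vsub y x))) c.
Qed.

Lemma frechet_of_comp (f : V -> C -> R) x A :
  (forall c, has_grad (fun y => f y c) x (A c)) -> frechet f x A.
Proof.
move=> H eps He.
have [He' Hb] := shrink_pos (pos_INR #|C|) He; set e := eps / _ in He' Hb.
pose P c d := forall y, norm (vsub y x) < d ->
   Rabs (f y c - f x c - dot (A c) (vsub y x)) <= e * norm (vsub y x).
have [d [Hd Hall]] : exists d, 0 < d /\ forall c, P c d.
  apply: fin_small => c; have [d [Hd Hy]] := H c e He'.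
  by exists d; split => // d' Hd' Hle y Hyx; apply: Hy; lra.
exists d; split => // y Hyx.
apply: Rle_trans (norm_le_comp_bound (e := e * norm (vsub y x)) _) _.
  by move=> c; apply: Hall.
have := Rmult_le_compat_r _ _ _ (norm_ge0 (vsub y x)) (Rlt_le _ _ Hb); lra.
Qed.

Lemma cont_at_comp (f : V -> C -> R) y :
  cont_at f y -> forall c, scont (fun z => f z c) y.
Proof.
move=> H c eps He; have [d [Hd H1]] := H eps He; exists d; split => // z Hz.
apply: Rle_lt_trans (H1 z Hz).
by have := comp_le_norm (vsub (f z) (f y)) c.
Qed.

Lemma cont_of_comp (f : V -> C -> R) x :
  (forall c, scont (fun y => f y c) x) -> cont_at f x.
Proof.
move=> H eps He.
have [He' Hb] := shrink_pos (pos_INR #|C|) He; set e := eps / _ in He' Hb.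
pose P c d := forall y, norm (vsub y x) < d -> Rabs (f y c - f x c) < e.
have [d [Hd Hall]] : exists d, 0 < d /\ forall c, P c d.
  apply: fin_small => c; have [d [Hd Hy]] := H c e He'.
  by exists d; split => // d' Hd' Hle y Hyx; apply: Hy; lra.
exists d; split => // y Hyx.
apply: Rle_lt_trans (norm_le_comp_bound (e := e) _) _.
  by move=> c; apply: Rlt_le; apply: Hall.
lra.
Qed.

Lemma lapply_bound (A : C -> D -> R) h :
  norm (lapply A h) <= rsum (fun c => rsum (fun d => Rabs (A c d))) * norm h.
Proof.
apply: Rle_trans (norm_le_sum_abs _) _.
by rewrite -rsum_scalr; apply: rsum_le => c; apply: abs_dot_le.
Qed.

Lemma frechet_Lp (f : V -> C -> R) x A : frechet f x A -> reg_at CLp f x.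
Proof.
move=> H; have [d [Hd Hy]] := H 1 Rlt_0_1.
set M := rsum (fun c => rsum (fun d => Rabs (A c d))).
have HM : 0 <= M by apply: rsum_ge0 => c; apply: rsum_ge0 => j; apply: Rabs_pos.
exists (d / 2), (1 + M); do 2 (split; first lra).
move=> y Hyx; have := Hy y ltac:(lra); have := lapply_bound A (vsub y x).
have : norm (vsub (f y) (f x)) <=
  norm (vsub (vsub (f y) (f x)) (lapply A (vsub y x))) + norm (lapply A (vsub y x)).
  rewrite (@norm_ext _ (vsub (f y) (f x))
    (fun i => vsub (vsub (f y) (f x)) (lapply A (vsub y x)) i + lapply A (vsub y x) i)).
    exact: norm_triang.
  by move=> i; rewrite /vsub; ring.
rewrite -/M; lra.
Qed.

End Componentwise.

Lemma prod_lip a a0 b b0 A Ka Kb n :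
  Rabs a <= A -> Rabs (a - a0) <= Ka * n -> Rabs (b - b0) <= Kb * n ->
  Rabs (a * b - a0 * b0) <= (A * Kb + Rabs b0 * Ka) * n.
Proof.
move=> H1 H2 H3.
rewrite (_ : a * b - a0 * b0 = a * (b - b0) + b0 * (a - a0)); last ring.
apply: Rle_trans (Rabs_triang _ _) _.
have := mul_bound H1 H3; have := mul_bound (Rle_refl (Rabs b0)) H2; lra.
Qed.

Lemma abs_sub_bound a a0 K n : Rabs (a - a0) <= K * n -> Rabs a <= Rabs a0 + K * n.
Proof.
by move=> H; have := Rabs_triang (a - a0) a0; rewrite (_ : a - a0 + a0 = a); [lra | ring].
Qed.

(* The flag [cf] is instantiated with
   "the class is C^1", the only class that needs continuity of derivatives. *)
Section C1Lp.
Variable D : finType.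
Notation V := (D -> R).
Variable cf : Prop.
Variable x0 : V.

Definition c1lp_with (r : R) (f : V -> R) (Df : V -> V) (K : R) :=
  0 <= K /\ forall y, norm (vsub y x0) <= r ->
  [/\ has_grad f y (Df y),
      Rabs (f y - f x0) <= K * norm (vsub y x0),
      (forall d, Rabs (Df y d - Df x0 d) <= K * norm (vsub y x0)) &
      (cf -> norm (vsub y x0) < r -> forall d, scont (fun z => Df z d) y)].

Definition c1lp r f := exists Df K, c1lp_with r f Df K.

Lemma c1lp_with_bound r f Df K y : c1lp_with r f Df K -> norm (vsub y x0) <= r ->
  Rabs (f y) <= Rabs (f x0) + K * r /\ forall d, Rabs (Df y d) <= Rabs (Df x0 d) + K * r.
Proof.
move=> [HK H] Hy; have [_ H2 H3 _] := H y Hy.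
have := Rmult_le_compat_l K _ _ HK Hy => HKr.
split; first by apply: Rle_trans (abs_sub_bound H2) _; lra.
by move=> d; apply: Rle_trans (abs_sub_bound (H3 d)) _; lra.
Qed.

Lemma c1lp_ext r f g : (forall y, f y = g y) -> c1lp r f -> c1lp r g.
Proof.
move=> E [Df [K [HK H]]]; exists Df, K; split => // y Hy.
have [H1 H2 H3 H4] := H y Hy; split => //.
- exact: (has_grad_ext E (fun _ => erefl) H1).
- by rewrite -!E.
Qed.

Lemma c1lp_ext_loc r f g : 0 < r -> (forall y, norm (vsub y x0) <= r -> f y = g y) ->
  c1lp r f -> c1lp (r / 2) g.
Proof.
move=> Hr E [Df [K [HK H]]]; exists Df, K; split => // y Hy.
have Hy' : norm (vsub y x0) <= r by lra.
have [H1 H2 H3 H4] := H y Hy'; split => //.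
- apply: (has_grad_ext_loc (d := r / 2)) H1; first lra.
  by move=> z Hz; apply: E; have := norm_vsub_triang z y x0; lra.
- by rewrite -!E //; rewrite norm_self; lra.
- by move=> Hc Hlt; apply: H4 => //; lra.
Qed.

Lemma c1lp_mono r r' f : r' <= r -> c1lp r f -> c1lp r' f.
Proof.
move=> Hr [Df [K [HK H]]]; exists Df, K; split => // y Hy.
by have [H1 H2 H3 H4] := H y (Rle_trans _ _ _ Hy Hr); split => // Hc Hlt; apply: H4 => //; lra.
Qed.

Lemma c1lp_const r c : c1lp r (fun _ => c).
Proof.
exists (fun _ _ => 0), 0; split => [|y Hy]; first lra.
split.
- exact: has_grad_const.
- by rewrite Rminus_diag Rabs_R0; lra.
- by move=> d; rewrite Rminus_diag Rabs_R0; lra.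
- by move=> _ _ d; apply: scont_const.
Qed.

Lemma c1lp_add r f g : c1lp r f -> c1lp r g -> c1lp r (fun y => f y + g y).
Proof.
move=> [Df [Kf [HKf Hf]]] [Dg [Kg [HKg Hg]]].
exists (fun y d => Df y d + Dg y d), (Kf + Kg); split => [|y Hy]; first lra.
have [F1 F2 F3 F4] := Hf y Hy; have [G1 G2 G3 G4] := Hg y Hy; split.
- exact: has_grad_add.
- rewrite (_ : f y + g y - (f x0 + g x0) = (f y - f x0) + (g y - g x0)); last ring.
  by apply: Rle_trans (Rabs_triang _ _) _; lra.
- move=> d; rewrite (_ : Df y d + Dg y d - (Df x0 d + Dg x0 d) =
    (Df y d - Df x0 d) + (Dg y d - Dg x0 d)); last ring.
  by apply: Rle_trans (Rabs_triang _ _) _; have := F3 d; have := G3 d; lra.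
- by move=> Hc Hlt d; apply: scont_add; [apply: F4 | apply: G4].
Qed.

Lemma c1lp_mul r f g : c1lp r f -> c1lp r g -> c1lp r (fun y => f y * g y).
Proof.
move=> [Df [Kf GF]] [Dg [Kg GG]].
have [HKf Hf] := GF; have [HKg Hg] := GG.
set Bf := Rabs (f x0) + Kf * r; set Bg := Rabs (g x0) + Kg * r.
set Sf := rsum (fun d => Rabs (Df x0 d)); set Sg := rsum (fun d => Rabs (Dg x0 d)).
have HSf d : Rabs (Df x0 d) <= Sf by apply: rsum_nonneg_le => j; apply: Rabs_pos.
have HSg d : Rabs (Dg x0 d) <= Sg by apply: rsum_nonneg_le => j; apply: Rabs_pos.
set K1 := Bf * Kg + Rabs (g x0) * Kf.
set K2 := Bf * Kg + Sg * Kf.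
set K3 := Bg * Kf + Sf * Kg.
exists (fun y d => f y * Dg y d + g y * Df y d), (Rabs K1 + Rabs K2 + Rabs K3).
have P1 := Rabs_pos K1; have P2 := Rabs_pos K2; have P3 := Rabs_pos K3.
split => [|y Hy]; first lra.
have [F1 F2 F3 F4] := Hf y Hy; have [G1 G2 G3 G4] := Hg y Hy.
have [Bfy _] := c1lp_with_bound GF Hy; have [Bgy _] := c1lp_with_bound GG Hy.
rewrite -/Bf in Bfy; rewrite -/Bg in Bgy.
have Hn := norm_ge0 (vsub y x0); set n := norm (vsub y x0) in Hn F2 G2 F3 G3 Hy *.
have Hk k : k * n <= Rabs k * n by apply: Rmult_le_compat_r => //; apply: Rle_abs.
have := Hk K1; have := Hk K2; have := Hk K3 => HK3 HK2 HK1.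
have := Rmult_le_pos _ _ P1 Hn; have := Rmult_le_pos _ _ P2 Hn;
have := Rmult_le_pos _ _ P3 Hn => Q3 Q2 Q1.
split.
- exact: has_grad_mul.
- by have := prod_lip Bfy F2 G2; rewrite -/K1; lra.
- move=> d.
  rewrite (_ : f y * Dg y d + g y * Df y d - (f x0 * Dg x0 d + g x0 * Df x0 d) =
     (f y * Dg y d - f x0 * Dg x0 d) + (g y * Df y d - g x0 * Df x0 d)); last ring.
  apply: Rle_trans (Rabs_triang _ _) _.
  have T1 := prod_lip Bfy F2 (G3 d); have T2 := prod_lip Bgy G2 (F3 d).
  have E1 : (Bf * Kg + Rabs (Dg x0 d) * Kf) * n <= K2 * n.
    by apply: Rmult_le_compat_r => //; have := HSg d; rewrite /K2; nra.
  have E2 : (Bg * Kf + Rabs (Df x0 d) * Kg) * n <= K3 * n.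
    by apply: Rmult_le_compat_r => //; have := HSf d; rewrite /K3; nra.
  lra.
- move=> Hc Hlt d; apply: scont_add; apply: scont_mul.
  + exact: has_grad_cont F1.
  + exact: G4.
  + exact: has_grad_cont G1.
  + exact: F4.
Qed.

Lemma c1lp_sub r f g : c1lp r f -> c1lp r g -> c1lp r (fun y => f y - g y).
Proof.
move=> Hf Hg; apply: (c1lp_ext (f := fun y => f y + -1 * g y)) => [y|]; first ring.
by apply: c1lp_add => //; apply: c1lp_mul => //; apply: c1lp_const.
Qed.

Lemma c1lp_big r (T : Type) (s : seq T) (P : pred T) (F : T -> V -> R) :
  (forall i, P i -> c1lp r (F i)) ->
  c1lp r (fun y => \big[Rplus/R0]_(i <- s | P i) F i y).
Proof.
move=> H; elim: s => [|i s IH].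
  by apply: (c1lp_ext (f := fun _ => 0)) (c1lp_const _ _) => y; rewrite big_nil.
apply: (c1lp_ext (f := fun y => (if P i then F i y else 0) + \big[Rplus/R0]_(j <- s | P j) F j y)).
  by move=> y; rewrite big_cons; case: (P i) => //; ring.
by apply: c1lp_add => //; case HP : (P i); [apply: H | apply: c1lp_const].
Qed.

Lemma c1lp_dot r n (u w : V -> 'I_n -> R) :
  (forall j, c1lp r (fun y => u y j)) -> (forall j, c1lp r (fun y => w y j)) ->
  c1lp r (fun y => dot (u y) (w y)).
Proof.
by move=> Hu Hw; apply: (@c1lp_big r _ _ _ (fun j y => u y j * w y j)) => j _; apply: c1lp_mul.
Qed.

Lemma c1lp_pos r f : 0 < r -> c1lp r f -> 0 < f x0 ->
  exists r', 0 < r' /\ r' <= r /\ forall y, norm (vsub y x0) <= r' -> f x0 / 2 <= f y.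
Proof.
move=> Hr [Df [K [HK H]]] Hf.
have [Hq Hb] := shrink_pos HK (ltac:(lra) : 0 < f x0 / 2).
exists (Rmin r (f x0 / 2 / (K + 1))); split; first exact: Rmin_pos.
split; first exact: Rmin_l.
move=> y Hy; have [_ H2 _ _] := H y (Rle_trans _ _ _ Hy (Rmin_l _ _)).
have := Rmult_le_compat_l _ _ _ HK (Rle_trans _ _ _ Hy (Rmin_r _ _)).
have := Rle_abs (-(f y - f x0)); rewrite Rabs_Ropp; lra.
Qed.

Lemma c1lp_comp r f (S : R -> Prop) phi phi' L : 0 <= L ->
  (forall y, norm (vsub y x0) <= r -> S (f y)) ->
  (forall s, S s -> derivable_pt_lim phi s (phi' s)) ->
  (forall s t, S s -> S t -> Rabs (phi s - phi t) <= L * Rabs (s - t)) ->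
  (forall s t, S s -> S t -> Rabs (phi' s - phi' t) <= L * Rabs (s - t)) ->
  (forall s, S s -> Rabs (phi' s) <= L) ->
  c1lp r f -> c1lp r (fun y => phi (f y)).
Proof.
move=> HL HS Hd Hl1 Hl2 Hb [Df [Kf [HKf Hf]]].
set Sf := rsum (fun d => Rabs (Df x0 d)).
have HSf : 0 <= Sf by apply: rsum_ge0 => d; apply: Rabs_pos.
have HSf' d : Rabs (Df x0 d) <= Sf by apply: rsum_nonneg_le => j; apply: Rabs_pos.
have P1 : 0 <= L * Kf by apply: Rmult_le_pos.
exists (fun y d => phi' (f y) * Df y d), (L * Kf + L * Kf + Sf * (L * Kf)).
split => [|y Hy]; first by have := Rmult_le_pos _ _ HSf P1; lra.
have [F1 F2 F3 F4] := Hf y Hy.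
have Hn := norm_ge0 (vsub y x0).
have S0 : S (f x0) by apply: HS; rewrite norm_self; lra.
have Sy := HS y Hy.
have Q1 := Rmult_le_pos _ _ P1 Hn; have Q2 := Rmult_le_pos _ _ (Rmult_le_pos _ _ HSf P1) Hn.
split.
- by apply: has_grad_comp1 => //; apply: Hd.
- apply: Rle_trans (Hl1 _ _ Sy S0) _.
  have := Rmult_le_compat_l L _ _ HL F2; nra.
- move=> d.
  have A1 : Rabs (phi' (f y) - phi' (f x0)) <= (L * Kf) * norm (vsub y x0).
    by apply: Rle_trans (Hl2 _ _ Sy S0) _; rewrite Rmult_assoc; apply: Rmult_le_compat_l.
  have := prod_lip (Hb _ Sy) A1 (F3 d).
  have : (L * Kf + Rabs (Df x0 d) * (L * Kf)) * norm (vsub y x0) <=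
         (L * Kf + Sf * (L * Kf)) * norm (vsub y x0).
    by apply: Rmult_le_compat_r => //; have := Rmult_le_compat_r _ _ _ P1 (HSf' d); lra.
  nra.
- move=> Hc Hlt d; apply: scont_mul; last exact: F4.
  apply: (scont_comp_lip (phi := phi') HL); last exact: has_grad_cont F1.
  exists (r - norm (vsub y x0)); split => [|z Hz]; first lra.
  rewrite -Rabs_Ropp (_ : - (phi' (f z) - phi' (f y)) = phi' (f y) - phi' (f z)); last ring.
  rewrite -(Rabs_Ropp (f z - f y)) (_ : - (f z - f y) = f y - f z); last ring.
  by apply: Hl2 => //; apply: HS; have := norm_vsub_triang z y x0; lra.
Qed.

End C1Lp.

(* Square roots and inverses of c1lp maps bounded below by c > 0 are c1lp:
   on [c, +oo) both functions are C^1 with Lipschitz, bounded derivative. *)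
Section C1LpRootInverse.
Variable D : finType.
Notation V := (D -> R).
Variable cf : Prop.
Variable x0 : V.

Lemma sqrt_lip c s t : 0 < c -> c <= s -> c <= t ->
  Rabs (sqrt s - sqrt t) * (2 * sqrt c) <= Rabs (s - t).
Proof.
move=> Hc Hs Ht.
have Hsc : sqrt c <= sqrt s by apply: sqrt_le_1_alt.
have Htc : sqrt c <= sqrt t by apply: sqrt_le_1_alt.
have Hc' : 0 < sqrt c by apply: sqrt_lt_R0.
have -> : s - t = (sqrt s - sqrt t) * (sqrt s + sqrt t).
  rewrite (_ : (sqrt s - sqrt t) * (sqrt s + sqrt t) = sqrt s * sqrt s - sqrt t * sqrt t); last ring.
  by rewrite !sqrt_sqrt; lra.
rewrite Rabs_mult (Rabs_right (sqrt s + sqrt t)); last lra.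
by apply: Rmult_le_compat_l; [apply: Rabs_pos | lra].
Qed.

Lemma c1lp_sqrt r f c : 0 < c -> (forall y, norm (vsub y x0) <= r -> c <= f y) ->
  c1lp cf x0 r f -> c1lp cf x0 r (fun y => sqrt (f y)).
Proof.
move=> Hc HS Hg.
have Hq : 0 < sqrt c by apply: sqrt_lt_R0.
set q := sqrt c in Hq *.
have Hqc : q * q = c by rewrite /q sqrt_sqrt; lra.
have H1 : 0 < / (2 * q) by apply: Rinv_0_lt_compat; lra.
have H2 : 0 < / (4 * q * c) by apply: Rinv_0_lt_compat; nra.
set L := / (2 * q) + / (4 * q * c).
have Hsq s : c <= s -> q <= sqrt s by move=> Hs; apply: sqrt_le_1_alt.
have Hroot s t : c <= s -> c <= t -> Rabs (sqrt s - sqrt t) <= / (2 * q) * Rabs (s - t).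
  move=> Hs Ht; have := sqrt_lip Hc Hs Ht; rewrite -/q => H.
  apply: (Rmult_le_reg_r (2 * q)); first lra.
  by rewrite (Rmult_comm (/ (2 * q))) Rmult_assoc Rinv_l; lra.
apply: (c1lp_comp (S := fun s => c <= s) (phi' := fun s => / (2 * sqrt s)) (L := L)) => //.
- by rewrite /L; lra.
- by move=> s Hs; apply: derivable_pt_lim_sqrt; lra.
- by move=> s t Hs Ht; apply: Rle_trans (Hroot s t Hs Ht) _;
    apply: Rmult_le_compat_r; [apply: Rabs_pos | rewrite /L; lra].
- move=> s t Hs Ht.
  have := Hsq s Hs; have := Hsq t Ht => Htq Hsq'.
  have E : / (2 * sqrt s) - / (2 * sqrt t) = (sqrt t - sqrt s) / (2 * sqrt s * sqrt t)
    by field; lra.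
  rewrite E /Rdiv Rabs_mult Rabs_inv (Rabs_right (2 * sqrt s * sqrt t)); last nra.
  have Hi : / (2 * sqrt s * sqrt t) <= / (2 * q * q) by apply: Rinv_le_contravar; nra.
  rewrite -(Rabs_Ropp (s - t)) (_ : - (s - t) = t - s); last ring.
  apply: Rle_trans (Rmult_le_compat _ _ _ _ (Rabs_pos _)
    (Rlt_le _ _ (Rinv_0_lt_compat (2 * sqrt s * sqrt t) ltac:(nra))) (Hroot t s Ht Hs) Hi) _.
  have -> : / (2 * q) * Rabs (t - s) * / (2 * q * q) = / (4 * q * c) * Rabs (t - s).
    by rewrite -Hqc; field; lra.
  by apply: Rmult_le_compat_r; [apply: Rabs_pos | rewrite /L; lra].
- move=> s Hs; rewrite Rabs_right; last by apply: Rle_ge; apply: Rlt_le;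
    apply: Rinv_0_lt_compat; have := Hsq s Hs; lra.
  have : / (2 * sqrt s) <= / (2 * q) by apply: Rinv_le_contravar; have := Hsq s Hs; lra.
  by rewrite /L; lra.
Qed.

Lemma derivable_pt_lim_Rinv s : s <> 0 -> derivable_pt_lim Rinv s (- / (s * s)).
Proof.
move=> Hs.
have := derivable_pt_lim_div (fct_cte 1) Ranalysis1.id s 0 1
  (derivable_pt_lim_const 1 s) (derivable_pt_lim_id s) Hs.
rewrite /Ranalysis1.id => H.
apply: (derivable_pt_lim_ext (fct_cte 1 / Ranalysis1.id)%F).
  by move=> z; rewrite /div_fct /fct_cte /Ranalysis1.id /Rdiv Rmult_1_l.
rewrite (_ : - / (s * s) = (0 * Ranalysis1.id s - 1 * fct_cte 1 s) / Rsqr (Ranalysis1.id s)) //.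
by rewrite /Ranalysis1.id /fct_cte /Rsqr; field.
Qed.

Lemma c1lp_inv r f c : 0 < c -> (forall y, norm (vsub y x0) <= r -> c <= f y) ->
  c1lp cf x0 r f -> c1lp cf x0 r (fun y => / f y).
Proof.
move=> Hc HS Hg.
have Hcc : 0 < c * c by nra.
have HL1 : 0 < / (c * c) by apply: Rinv_0_lt_compat.
have HL2 : 0 < 2 / (c * c * c) by apply: Rdiv_lt_0_compat; nra.
set L := / (c * c) + 2 / (c * c * c).
have Hprod s t : c <= s -> c <= t -> / s * / t <= / (c * c).
  by move=> Hs Ht; rewrite -Rinv_mult; apply: Rinv_le_contravar; nra.
have Hinv s : c <= s -> 0 < / s /\ / s <= / c.
  by move=> Hs; split; [apply: Rinv_0_lt_compat | apply: Rinv_le_contravar]; lra.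
apply: (c1lp_comp (S := fun s => c <= s) (phi' := fun s => - / (s * s)) (L := L)) => //.
- by rewrite /L; lra.
- by move=> s Hs; apply: derivable_pt_lim_Rinv; lra.
- move=> s t Hs Ht.
  rewrite (_ : / s - / t = (t - s) * (/ s * / t)); last by field; lra.
  rewrite Rabs_mult -(Rabs_Ropp (s - t)) (_ : - (s - t) = t - s); last ring.
  rewrite (Rmult_comm L); apply: Rmult_le_compat_l; first exact: Rabs_pos.
  have [Hs0 _] := Hinv s Hs; have [Ht0 _] := Hinv t Ht; have := Hprod s t Hs Ht.
  by rewrite Rabs_right /L; nra.
- move=> s t Hs Ht.
  rewrite (_ : - / (s * s) - - / (t * t) = (s - t) * ((/ t + / s) * (/ s * / t)));
    last by field; lra.
  rewrite Rabs_mult (Rmult_comm L); apply: Rmult_le_compat_l; first exact: Rabs_pos.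
  have [Hs0 Hs'] := Hinv s Hs; have [Ht0 Ht'] := Hinv t Ht; have Hp := Hprod s t Hs Ht.
  have : (/ t + / s) * (/ s * / t) <= (2 / c) * / (c * c).
    by apply: Rmult_le_compat; rewrite /Rdiv; nra.
  rewrite (_ : 2 / c * / (c * c) = 2 / (c * c * c)); last by field; lra.
  by rewrite Rabs_right /L; nra.
- move=> s Hs; rewrite Rabs_Ropp Rabs_right; last by apply: Rle_ge; apply: Rlt_le;
    apply: Rinv_0_lt_compat; nra.
  have : / (s * s) <= / (c * c) by apply: Rinv_le_contravar; nra.
  by rewrite /L; lra.
Qed.

End C1LpRootInverse.

(* A map with a gradient on a ball, whose gradient is Lipschitz at the
   centre and (under cf) continuous, is c1lp on a smaller ball: the mean
   value inequality provides the Lipschitz bound on f itself. *)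
Lemma c1lp_of_grad (D : finType) cf (x0 : D -> R) f (Df : (D -> R) -> D -> R) rho rL KL :
  0 < rho -> 0 < rL -> 0 <= KL ->
  (forall y, norm (vsub y x0) < rho -> has_grad f y (Df y)) ->
  (forall y, norm (vsub y x0) <= rL -> forall d, Rabs (Df y d - Df x0 d) <= KL * norm (vsub y x0)) ->
  (cf -> forall y, norm (vsub y x0) < rho -> forall d, scont (fun z => Df z d) y) ->
  c1lp cf x0 (Rmin (rho / 2) rL) f.
Proof.
move=> Hrho HrL HKL Hd HL Hc.
set r := Rmin (rho / 2) rL.
have Hr1 : r <= rho / 2 by apply: Rmin_l.
have Hr2 : r <= rL by apply: Rmin_r.
have Hr : 0 < r by apply: Rmin_pos; lra.
set B := rsum (fun d => Rabs (Df x0 d) + KL * r).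
have HB : 0 <= B.
  by apply: rsum_ge0 => d; have := Rabs_pos (Df x0 d); have := Rmult_le_pos _ _ HKL (Rlt_le _ _ Hr); lra.
exists Df, (KL + B); split => [|y Hy]; first lra.
have Hn := norm_ge0 (vsub y x0).
have Hseg t : 0 <= t <= 1 -> norm (vsub (seg x0 y t) x0) <= r.
  by move=> Ht; apply: Rle_trans (seg_in_ball x0 y Ht) Hy.
split.
- by apply: Hd; lra.
- have : Rabs (f y - f x0) <= B * norm (vsub y x0).
    apply: (mvt_seg (G := Df)) => t Ht; first by apply: Hd; have := Hseg t Ht; lra.
    apply: Rle_trans (abs_dot_le _ _) _; apply: Rmult_le_compat_r => //.
    apply: rsum_le => d; apply: Rle_trans (abs_sub_bound (HL (seg x0 y t) ltac:(have := Hseg t Ht; lra) d)) _.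
    by have := Rmult_le_compat_l _ _ _ HKL (Hseg t Ht); lra.
  by have := Rmult_le_pos _ _ HKL Hn; lra.
- by move=> d; apply: Rle_trans (HL y ltac:(lra) d) _; have := Rmult_le_pos _ _ HB Hn; lra.
- by move=> Hcf Hlt d; apply: Hc => //; lra.
Qed.

Section C1LpFamily.
Variables D C : finType.
Notation V := (D -> R).
Variable cf : Prop.
Variable x0 : V.
Variable r0 : R.
Hypothesis Hr0 : 0 < r0.
Variable f : V -> C -> R.
Variable Ds : C -> V -> V.
Variable Ks : C -> R.
Hypothesis Hf : forall c, c1lp_with cf x0 r0 (fun y => f y c) (Ds c) (Ks c).

Lemma c1lp_family_frechet y : norm (vsub y x0) <= r0 -> frechet f y (fun c d => Ds c y d).
Proof.
move=> Hy; apply: frechet_of_comp => c.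
by have [_ Hc] := Hf c; have [H1 _ _ _] := Hc y Hy.
Qed.

(* f is Lipschitz on the whole ball B(x0, r0), which is convex. *)
Lemma c1lp_family_lipschitz : exists M, 0 <= M /\
  forall y z, norm (vsub y x0) <= r0 -> norm (vsub z x0) <= r0 ->
    norm (vsub (f y) (f z)) <= M * norm (vsub y z).
Proof.
have HKs c : 0 <= Ks c by have [HK _] := Hf c.
exists (rsum (fun c => rsum (fun d => Rabs (Ds c x0 d) + Ks c * r0))); split.
  apply: rsum_ge0 => c; apply: rsum_ge0 => d; have := Rabs_pos (Ds c x0 d).
  by have := Rmult_le_pos _ _ (HKs c) (Rlt_le _ _ Hr0); lra.
move=> y z Hy Hz.
rewrite norm_vsub_sym (norm_vsub_sym y z).
apply: Rle_trans (norm_le_sum_abs _) _; rewrite -rsum_scalr; apply: rsum_le => c.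
have [HK Hc] := Hf c.
have Hseg t : 0 <= t <= 1 -> norm (vsub (seg y z t) x0) <= r0.
  move=> Ht; apply: Rle_trans (seg_conv x0 y z Ht) _.
  by have := Rmult_le_compat_l (1 - t) _ _ ltac:(lra) Hy; have := Rmult_le_compat_l t _ _ ltac:(lra) Hz; lra.
apply: (mvt_seg (f := fun w => f w c) (G := Ds c)) => t Ht.
  by have [H1 _ _ _] := Hc _ (Hseg t Ht).
apply: Rle_trans (abs_dot_le _ _) _; apply: Rmult_le_compat_r; first exact: norm_ge0.
apply: rsum_le => d; have [_ _ H3 _] := Hc _ (Hseg t Ht).
apply: Rle_trans (abs_sub_bound (H3 d)) _.
by have := Rmult_le_compat_l _ _ _ HK (Hseg t Ht); lra.
Qed.

Lemma c1lp_family_reg (cls : reg_class) : (cls = Defs.C1 -> cf) ->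
  forall x, norm (vsub x x0) < r0 / 2 -> reg_at cls f x.
Proof.
move=> Hcf x Hx.
have Hin y : norm (vsub y x) <= r0 / 2 -> norm (vsub y x0) < r0.
  by move=> Hy; have := norm_vsub_triang y x x0; lra.
have Hx0 : norm (vsub x x0) <= r0 by lra.
case: cls Hcf => Hcf /=.
- apply: cont_of_comp => c; have [_ Hc] := Hf c; have [H1 _ _ _] := Hc x Hx0.
  exact: has_grad_cont H1.
- exact: frechet_Lp (c1lp_family_frechet Hx0).
- have [M [HM HL]] := c1lp_family_lipschitz.
  exists (r0 / 2), M; do 2 (split; first lra).
  by move=> y z Hy Hz; apply: HL; apply: Rlt_le; apply: Hin.
- by exists (fun c d => Ds c x d); apply: c1lp_family_frechet.
- exists (r0 / 2), (fun y c d => Ds c y d); split; first lra; split.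
    by move=> y Hy; apply: c1lp_family_frechet; apply: Rlt_le; apply: Hin; lra.
  apply: (cont_of_comp (C := (C * D)%type)) => [[c d]] /=.
  have [_ Hc] := Hf c; have [_ _ _ H4] := Hc x Hx0.
  by apply: H4; [apply: Hcf | lra].
Qed.

(* Taylor estimate of order two for one component, from the Lipschitz bound
   on its gradient at x0 and the mean value inequality. *)
Lemma c1lp_taylor c x : norm (vsub x x0) <= r0 ->
  Rabs (f x c - f x0 c - dot (Ds c x0) (vsub x x0)) <= INR #|D| * Ks c * norm (vsub x x0) ^ 2.
Proof.
move=> Hx; have [HK Hc] := Hf c.
have Hseg t : 0 <= t <= 1 -> norm (vsub (seg x0 x t) x0) <= norm (vsub x x0).
  exact: seg_in_ball.
have Hz : dot (Ds c x0) (vsub x0 x0) = 0.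
  by rewrite /dot (rsum_ext (g := fun _ => 0)) ?rsum0 // => i; rewrite /vsub; ring.
rewrite (_ : f x c - f x0 c - dot (Ds c x0) (vsub x x0) =
  (f x c - dot (Ds c x0) (vsub x x0)) - (f x0 c - dot (Ds c x0) (vsub x0 x0))); last first.
  by rewrite Hz; ring.
apply: (mvt_seg (f := fun w => f w c - dot (Ds c x0) (vsub w x0))
                (G := fun p d => Ds c p d - Ds c x0 d)) => t Ht;
  have Hp := Rle_trans _ _ _ (Hseg t Ht) Hx.
- have [H1 _ _ _] := Hc _ Hp.
  apply: (has_grad_ext (f := fun w => f w c + -1 * dot (Ds c x0) (vsub w x0))
                       (a := fun d => Ds c (seg x0 x t) d + -1 * Ds c x0 d)) => [w|d|]; try ring.
  by apply: has_grad_add => //; apply: has_grad_scal; apply: has_grad_lin.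
- have [_ _ H3 _] := Hc _ Hp.
  apply: Rle_trans (abs_dot_le _ _) _.
  have : rsum (fun d => Rabs (Ds c (seg x0 x t) d - Ds c x0 d)) <=
         INR #|D| * Ks c * norm (vsub x x0).
    rewrite Rmult_assoc -rsum_const; apply: rsum_le => d.
    by apply: Rle_trans (H3 d) _; apply: Rmult_le_compat_l => //; apply: Hseg.
  rewrite (_ : INR #|D| * Ks c * norm (vsub x x0) ^ 2 =
     (INR #|D| * Ks c * norm (vsub x x0)) * norm (vsub x x0)); last ring.
  by move=> H; apply: Rmult_le_compat_r => //; apply: norm_ge0.
Qed.

Lemma c1lp_family_quadratic : (forall c, f x0 c = 0) ->
  exists L, 0 < L /\ forall A, frechet f x0 A -> forall x, norm (vsub x x0) <= r0 ->
    norm (vsub (f x) (lapply A (vsub x x0))) <= L * (norm (vsub x x0)) ^ 2.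
Proof.
move=> Hf0.
have HKs c : 0 <= Ks c by have [HK _] := Hf c.
have HL0 : 0 <= rsum (fun c => INR #|D| * Ks c).
  by apply: rsum_ge0 => c; apply: Rmult_le_pos => //; apply: pos_INR.
exists (rsum (fun c => INR #|D| * Ks c) + 1); split => [|A HA x Hx]; first lra.
have H0 : norm (vsub x0 x0) <= r0 by rewrite norm_self; lra.
have EA c : forall d, A c d = Ds c x0 d.
  have [_ Hc] := Hf c; have [H1 _ _ _] := Hc x0 H0.
  exact: has_grad_unique (frechet_comp HA c) H1.
apply: Rle_trans (norm_le_sum_abs _) _.
rewrite Rmult_plus_distr_r -rsum_scalr.
have : 0 <= 1 * norm (vsub x x0) ^ 2 by have := norm_ge0 (vsub x x0); nra.
suff : rsum (fun c => Rabs (vsub (f x) (lapply A (vsub x x0)) c)) <=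
       rsum (fun c => INR #|D| * Ks c * norm (vsub x x0) ^ 2) by lra.
apply: rsum_le => c; apply: Rle_trans (c1lp_taylor c Hx).
apply: Req_le; rewrite /vsub /lapply Hf0 Rminus_0_r.
by congr (Rabs (_ - _)); apply: rsum_ext => d; rewrite EA.
Qed.

End C1LpFamily.

Lemma c1lp_choice (D C : finType) cf (x0 : D -> R) r0 (f : (D -> R) -> C -> R) :
  (forall c, c1lp cf x0 r0 (fun y => f y c)) ->
  exists (Ds : C -> (D -> R) -> D -> R) (Ks : C -> R),
    forall c, c1lp_with cf x0 r0 (fun y => f y c) (Ds c) (Ks c).
Proof.
move=> H.
pose P c (p : ((D -> R) -> D -> R) * R) := c1lp_with cf x0 r0 (fun y => f y c) p.1 p.2.
have Hex c : exists p, P c p by have [Df [K HK]] := H c; exists (Df, K).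
exists (fun c => (proj1_sig (constructive_indefinite_description _ (Hex c))).1).
exists (fun c => (proj1_sig (constructive_indefinite_description _ (Hex c))).2).
by move=> c; apply: (proj2_sig (constructive_indefinite_description _ (Hex c))).
Qed.

Lemma norm_eq0 (I : finType) (u : I -> R) : norm u = 0 -> forall i, u i = 0.
Proof.
move=> H i; have := comp_le_norm u i; rewrite H => Hi.
by have := Rabs_pos (u i); case: (Rcase_abs (u i)) => Hs;
  [rewrite Rabs_left in Hi | rewrite Rabs_right in Hi]; lra.
Qed.

Section GramSchmidtAlgebra.
Variable n : nat.
Variable row : nat -> 'I_n -> R.

Lemma jhat_eq i : jhat row i = normalize (vGS row i).
Proof. by rewrite /jhat /= eqxx. Qed.

Lemma gs_hats_lt i k : (k < i)%N -> gs_hats row i k = jhat row k.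
Proof.
elim: i => [|i IH] //= Hk.
case: eqP => [->|Hne]; first by rewrite jhat_eq.
by apply: IH; move: Hk; rewrite ltnS leq_eqVlt => /orP [/eqP|].
Qed.

Lemma vGS_eq i c : vGS row i c =
  row i c - \big[Rplus/R0]_(k < i) (dot (jhat row k) (row i) * jhat row k c).
Proof.
rewrite /vGS /gs_resid; congr (_ - _); apply: eq_bigr => k _.
by rewrite gs_hats_lt.
Qed.

Lemma cGS_diag i : cGS row i i = norm (vGS row i).
Proof. by rewrite /cGS ltnn eqxx. Qed.

Lemma cGS_lt i k : (k < i)%N -> cGS row i k = dot (jhat row k) (row i).
Proof. by rewrite /cGS => ->. Qed.

Lemma cGS_gt i k : (i < k)%N -> cGS row i k = 0.
Proof. by move=> H; rewrite /cGS ltnNge (ltnW H) /= eq_sym (ltn_eqF H). Qed.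

Lemma normalize_pos (v : 'I_n -> R) c : 0 < norm v -> normalize v c = v c / norm v.
Proof. by move=> H; rewrite /normalize; case: Rlt_dec. Qed.

(* c_ii ĵ_i = v_i, whatever the convention for a vanishing pivot. *)
Lemma cv_eq i c : cGS row i i * jhat row i c = vGS row i c.
Proof.
rewrite cGS_diag jhat_eq /normalize; case: Rlt_dec => H /=; first by field; lra.
have H0 : norm (vGS row i) = 0 by have := norm_ge0 (vGS row i); lra.
by rewrite (norm_eq0 H0 c); ring.
Qed.

Lemma vGS_zero i : (forall c, row i c = 0) -> vGS row i = fun _ => 0.
Proof.
move=> H; apply: functional_extensionality => c; rewrite vGS_eq H big1; first ring.
move=> k _; rewrite (_ : row i = fun _ => 0); last exact: functional_extensionality.
by rewrite dot_zero_r; ring.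
Qed.

Lemma jhat_zero i : (forall c, row i c = 0) -> forall c, jhat row i c = 0.
Proof.
move=> H c; rewrite jhat_eq /normalize vGS_zero // norm_zero.
by case: Rlt_dec => // Hlt; lra.
Qed.

Lemma cdiag_zero i : (forall c, row i c = 0) -> cGS row i i = 0.
Proof. by move=> H; rewrite cGS_diag vGS_zero // norm_zero. Qed.

End GramSchmidtAlgebra.

Section GramSchmidtRegularity.
Variable D : finType.
Notation V := (D -> R).
Variable cf : Prop.
Variable x0 : V.
Variable n : nat.
Variable row : V -> nat -> 'I_n -> R.
Variable r0 : R.
Hypothesis Hrow : forall i j, c1lp cf x0 r0 (fun y => row y i j).

Definition pivots_regular N r c :=
  0 < r /\ r <= r0 /\ 0 < c /\ forall k, (k < N)%N ->
   (forall y, norm (vsub y x0) <= r -> c <= norm (vGS (row y) k)) /\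
   forall j, c1lp cf x0 r (fun y => jhat (row y) k j).

Lemma pivots_regular_le N N' r c : (N' <= N)%N -> pivots_regular N r c -> pivots_regular N' r c.
Proof.
move=> HN [Hr [Hrr [Hc H]]]; do 3 (split => //).
by move=> k Hk; apply: H; apply: leq_trans HN.
Qed.

Lemma residual_c1lp N r c : pivots_regular N r c ->
  forall j, c1lp cf x0 r (fun y => vGS (row y) N j).
Proof.
move=> [Hr [Hrr [Hc H]]] j.
apply: (c1lp_ext (f := fun y => row y N j -
  \big[Rplus/R0]_(k < N) (dot (jhat (row y) k) (row y N) * jhat (row y) k j))).
  by move=> y; rewrite vGS_eq.
apply: c1lp_sub; first exact: c1lp_mono Hrr (Hrow N j).
apply: (@c1lp_big _ _ _ _ _ _ _ (fun (k : 'I_N) y =>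
  dot (jhat (row y) k) (row y N) * jhat (row y) k j)) => k _.
have [_ Hk] := H k (ltn_ord k).
by apply: c1lp_mul => //; apply: c1lp_dot => // j'; apply: c1lp_mono Hrr (Hrow N j').
Qed.

Lemma pivot_c1lp N r c : pivots_regular N r c -> forall k, (k < N)%N ->
  c1lp cf x0 r (fun y => norm (vGS (row y) k)).
Proof.
move=> HC k Hk; have [Hr [Hrr [Hc H]]] := HC.
have Hv := residual_c1lp (pivots_regular_le (ltnW Hk) HC).
apply: (c1lp_sqrt (c := c * c)); first nra.
  by move=> y Hy; have [Hlow _] := H k Hk; have := Hlow y Hy; rewrite -norm_sq; nra.
exact: c1lp_dot.
Qed.

Lemma pivots_regular_near (Hr0 : 0 < r0) N :
  (forall k, (k < N)%N -> 0 < norm (vGS (row x0) k)) -> exists r c, pivots_regular N r c.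
Proof.
elim: N => [|N IH] Hpos.
  by exists r0, 1; do 3 (split; first lra).
have [r [c HC]] := IH (fun k Hk => Hpos k (ltnW Hk)).
have [Hr [Hrr [Hc H]]] := HC.
have Hd : c1lp cf x0 r (fun y => dot (vGS (row y) N) (vGS (row y) N)).
  by apply: c1lp_dot; apply: residual_c1lp HC.
have HP : 0 < dot (vGS (row x0) N) (vGS (row x0) N).
  by rewrite -norm_sq; have := Hpos N (ltnSn N); nra.
have [r1 [Hr1 [Hr1r Hlow]]] := c1lp_pos Hr Hd HP.
set P := dot (vGS (row x0) N) (vGS (row x0) N) in HP Hlow.
have Hsq : 0 < sqrt (P / 2) by apply: sqrt_lt_R0; lra.
have Hnl y : norm (vsub y x0) <= r1 -> sqrt (P / 2) <= norm (vGS (row y) N).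
  by move=> Hy; apply: sqrt_le_1_alt; apply: Hlow.
have Hn1 : c1lp cf x0 r1 (fun y => norm (vGS (row y) N)).
  by apply: (c1lp_sqrt (c := P / 2)) Hlow (c1lp_mono Hr1r Hd); lra.
have Hinv : c1lp cf x0 r1 (fun y => / norm (vGS (row y) N)) by apply: (c1lp_inv Hsq).
exists (r1 / 2), (Rmin c (sqrt (P / 2))).
do 2 (split; first lra); split; first exact: Rmin_pos.
move=> k; rewrite ltnS leq_eqVlt => /orP [/eqP -> | Hk].
- split => [y Hy|j]; first by apply: Rle_trans (Rmin_r _ _) _; apply: Hnl; lra.
  apply: (c1lp_ext_loc (f := fun y => vGS (row y) N j * / norm (vGS (row y) N))) => //.
    by move=> y Hy; rewrite jhat_eq normalize_pos //; have := Hnl y Hy; lra.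
  by apply: c1lp_mul => //; apply: c1lp_mono Hr1r (residual_c1lp HC j).
- have [Hl Hg] := H k Hk; split => [y Hy|j]; last by apply: c1lp_mono (Hg j); lra.
  by apply: Rle_trans (Rmin_l _ _) _; apply: Hl; lra.
Qed.

End GramSchmidtRegularity.

(* Matrix algebra with the entrywise l1 norm, used to show that the
   inverse of a continuous matrix-valued map is continuous. *)
Section MatrixNorm.
Variables p q : nat.
Notation M := ('I_p -> 'I_q -> R).

Definition Mnorm (A : M) := rsum (fun i => rsum (fun j => Rabs (A i j))).
Definition msub (A B : M) : M := fun i j => A i j - B i j.

Lemma Mnorm_ge0 A : 0 <= Mnorm A.
Proof. by apply: rsum_ge0 => i; apply: rsum_ge0 => j; apply: Rabs_pos. Qed.

Lemma Mnorm_entry A i j : Rabs (A i j) <= Mnorm A.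
Proof.
apply: Rle_trans (_ : rsum (fun j => Rabs (A i j)) <= _).
  by apply: rsum_nonneg_le => j'; apply: Rabs_pos.
apply: (rsum_nonneg_le (f := fun i => rsum (fun j => Rabs (A i j)))) => i'.
by apply: rsum_ge0 => j'; apply: Rabs_pos.
Qed.

Lemma Mnorm_triang A B : Mnorm A <= Mnorm B + Mnorm (msub A B).
Proof.
rewrite /Mnorm -rsum_add; apply: rsum_le => i; rewrite -rsum_add; apply: rsum_le => j.
have := Rabs_triang (B i j) (A i j - B i j).
by rewrite /msub (_ : B i j + (A i j - B i j) = A i j); [lra | ring].
Qed.

End MatrixNorm.

Lemma Mnorm_mul p q s (A : 'I_p -> 'I_q -> R) (B : 'I_q -> 'I_s -> R) :
  Mnorm (matmul A B) <= Mnorm A * Mnorm B.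
Proof.
rewrite /Mnorm /matmul -rsum_scalr; apply: rsum_le => i.
apply: Rle_trans (_ : rsum (fun j => rsum (fun k => Rabs (A i k) * Rabs (B k j))) <= _).
  apply: rsum_le => j; apply: Rle_trans (rsum_abs _) _; apply: rsum_le => k.
  by rewrite Rabs_mult; lra.
rewrite rsum_exchange -rsum_scalr; apply: rsum_le => k.
rewrite rsum_scal; apply: Rmult_le_compat_l; first exact: Rabs_pos.
apply: (rsum_nonneg_le (f := fun k => rsum (fun j => Rabs (B k j)))) => k'.
by apply: rsum_ge0 => j'; apply: Rabs_pos.
Qed.

Lemma matmul_assoc p q s t (A : 'I_p -> 'I_q -> R) (B : 'I_q -> 'I_s -> R)
  (C : 'I_s -> 'I_t -> R) : matmul (matmul A B) C = matmul A (matmul B C).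
Proof.
apply: functional_extensionality => i; apply: functional_extensionality => j.
rewrite /matmul (rsum_ext (g := fun l => rsum (fun k => A i k * B k l * C l j))); last first.
  by move=> l; rewrite rsum_scalr.
by rewrite rsum_exchange; apply: rsum_ext => k; rewrite -rsum_scal; apply: rsum_ext => l; ring.
Qed.

Lemma matmul_id_r p q (A : 'I_p -> 'I_q -> R) : matmul A (idm q) = A.
Proof.
apply: functional_extensionality => i; apply: functional_extensionality => j.
rewrite /matmul /idm (rsum_ext (g := fun k => if k == j then A i k else 0)) ?rsum_delta //.
by move=> k; case: eqP => _; ring.
Qed.

Lemma matmul_id_l p q (A : 'I_p -> 'I_q -> R) : matmul (idm p) A = A.
Proof.
apply: functional_extensionality => i; apply: functional_extensionality => j.
rewrite /matmul /idm (rsum_ext (g := fun k => if k == i then A k j else 0)) ?rsum_delta //.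
by move=> k; rewrite eq_sym; case: eqP => _; ring.
Qed.

Lemma matmul_subr p q s (A : 'I_p -> 'I_q -> R) (B C : 'I_q -> 'I_s -> R) :
  matmul A (msub B C) = msub (matmul A B) (matmul A C).
Proof.
do 2 apply: functional_extensionality => ?.
by rewrite /matmul /msub -rsum_sub; apply: rsum_ext => k; ring.
Qed.

Lemma matmul_subl p q s (A B : 'I_p -> 'I_q -> R) (C : 'I_q -> 'I_s -> R) :
  matmul (msub A B) C = msub (matmul A C) (matmul B C).
Proof.
do 2 apply: functional_extensionality => ?.
by rewrite /matmul /msub -rsum_sub; apply: rsum_ext => k; ring.
Qed.

(* Perturbation of inverses: if A0 B0 = 1 and B1 A1 = 1 then
   B1 - B0 = B1 (A0 - A1) B0, so B1 is close to B0 when A1 is close to A0. *)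
Lemma inverse_perturbation p (A0 B0 A1 B1 : 'I_p -> 'I_p -> R) :
  matmul A0 B0 = idm p -> matmul B1 A1 = idm p ->
  Mnorm (msub A0 A1) * Mnorm B0 <= / 2 ->
  Mnorm (msub B1 B0) <= 2 * Mnorm B0 * Mnorm B0 * Mnorm (msub A0 A1).
Proof.
move=> H0 H1 Hsmall.
have E : matmul (matmul B1 (msub A0 A1)) B0 = msub B1 B0.
  by rewrite matmul_subr matmul_subl matmul_assoc H0 matmul_id_r H1 matmul_id_l.
have Hd := Mnorm_ge0 (msub A0 A1); have Hb := Mnorm_ge0 B0.
have He := Mnorm_ge0 (msub B1 B0).
have HB1 := Mnorm_triang B1 B0.
have Hm1 := Mnorm_mul B1 (msub A0 A1).
have Hm2 := Mnorm_mul (matmul B1 (msub A0 A1)) B0; rewrite E in Hm2.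
have := Rmult_le_compat_r _ _ _ Hd HB1.
have := Rmult_le_compat_r _ _ _ Hb Hm1.
nra.
Qed.

Lemma Mnorm_cont (D : finType) p (A : (D -> R) -> 'I_p -> 'I_p -> R) y :
  (forall i j, scont (fun z => A z i j) y) ->
  forall e, 0 < e -> exists d, 0 < d /\
    forall z, norm (vsub z y) < d -> Mnorm (msub (A y) (A z)) <= e.
Proof.
move=> HA e He.
have HP := pos_INR #|'I_p|; set P := INR #|'I_p| in HP.
have [He' _] := shrink_pos (Rmult_le_pos _ _ HP HP) He; set e' := e / _ in He'.
pose Q (ij : 'I_p * 'I_p) d := forall z, norm (vsub z y) < d ->
  Rabs (A z ij.1 ij.2 - A y ij.1 ij.2) < e'.
have [d [Hd Hall]] : exists d, 0 < d /\ forall ij, Q ij d.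
  apply: fin_small => -[k l]; have [d [Hd H]] := HA k l e' He'.
  by exists d; split => // d' Hd' Hle z Hz; apply: H; lra.
exists d; split => // z Hz.
have : Mnorm (msub (A y) (A z)) <= P * (P * e').
  rewrite /Mnorm -!rsum_const; apply: rsum_le => k; apply: rsum_le => l.
  have := Hall (k, l) z Hz; rewrite /msub /= -Rabs_Ropp.
  by rewrite (_ : - (A z k l - A y k l) = A y k l - A z k l); [lra | ring].
have -> : P * (P * e') = e - e' by rewrite /e'; field; nra.
lra.
Qed.

Lemma inv_cont (D : finType) p (A B : (D -> R) -> 'I_p -> 'I_p -> R) y :
  (forall z, matmul (A z) (B z) = idm p /\ matmul (B z) (A z) = idm p) ->
  (forall i j, scont (fun z => A z i j) y) -> forall i j, scont (fun z => B z i j) y.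
Proof.
move=> Hinv HA i j eps He.
have Hb := Mnorm_ge0 (B y); move Hbe: (Mnorm (B y)) Hb => b Hb.
have Hb1 : 0 < / (2 * (b + 1)) by apply: Rinv_0_lt_compat; lra.
have Hb2 : 0 < eps / (2 * (b * b + 1)) by apply: Rdiv_lt_0_compat; nra.
have [d [Hd Hz]] := Mnorm_cont HA (Rmin_pos _ _ Hb1 Hb2).
exists d; split => // z Hzy; have Hdz := Hz z Hzy.
have Hd0 := Mnorm_ge0 (msub (A y) (A z)).
move Hde: (Mnorm (msub (A y) (A z))) Hdz Hd0 => del Hdz Hd0.
have Hd1 : del <= / (2 * (b + 1)) := Rle_trans _ _ _ Hdz (Rmin_l _ _).
have Hd2 : del <= eps / (2 * (b * b + 1)) := Rle_trans _ _ _ Hdz (Rmin_r _ _).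
have Hsmall : del * b <= / 2.
  have E : / (2 * (b + 1)) * (b + 1) = / 2 by field; lra.
  have := Rmult_le_compat_r (b + 1) _ _ ltac:(lra) Hd1; rewrite E; nra.
have Hpert := inverse_perturbation (proj1 (Hinv y)) (proj2 (Hinv z)).
rewrite Hbe Hde in Hpert; have {}Hpert := Hpert Hsmall.
have Hfin : 2 * b * b * del < eps.
  have E : 2 * b * b * (eps / (2 * (b * b + 1))) = eps - eps / (b * b + 1).
    by field; nra.
  have : 0 < eps / (b * b + 1) by apply: Rdiv_lt_0_compat; nra.
  have := Rmult_le_compat_l (2 * b * b) _ _ ltac:(nra) Hd2; rewrite E; lra.
have Hij : Rabs (B z i j - B y i j) <= Mnorm (msub (B z) (B y)) by apply: Mnorm_entry.
lra.
Qed.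

(* Continuity of DJ in class C^1.  Differentiating J R = F_q gives
   (DJ) R = DF_q - J (DR), hence DJ = (DF_q - J DR) R^{-1}, which is
   continuous when F and R are C^1, since R^{-1} is continuous. *)
Section JacobianDerivative.
Variables m n : nat.
Variable F : X n -> 'I_m -> 'I_n.+1 -> R.
Variables Rm Rinv : X n -> 'I_n -> 'I_n -> R.
Hypothesis Hinv : forall x, matmul (Rm x) (Rinv x) = idm n /\ matmul (Rinv x) (Rm x) = idm n.
Variable DJ : X n -> ('I_m * 'I_n)%type -> 'I_n.+1 -> R.
Notation J := (Jmat F Rinv).

Lemma Jmat_mul_R z i j : rsum (fun l => J z i l * Rm z l j) = F z i (lift ord0 j).
Proof.
have : matmul (J z) (Rm z) = Fq F z.
  by rewrite /Jmat matmul_assoc (proj2 (Hinv z)) matmul_id_r.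
by move=> /(congr1 (fun M => M i j)).
Qed.

Lemma DJ_identity (DF : X n -> ('I_m * 'I_n.+1)%type -> 'I_n.+1 -> R)
    (DR : X n -> ('I_n * 'I_n)%type -> 'I_n.+1 -> R) z :
  frechet (uncurry_map J) z (DJ z) -> frechet (uncurry_map F) z (DF z) ->
  frechet (uncurry_map Rm) z (DR z) -> forall i j d,
  rsum (fun l => J z i l * DR z (l, j) d + Rm z l j * DJ z (i, l) d) = DF z (i, lift ord0 j) d.
Proof.
move=> HfJ HfF HfR i j.
apply: (has_grad_unique (f := fun w => rsum (fun l => J w i l * Rm w l j)) (x := z)).
- apply: (@has_grad_big _ _ _ _ (fun l w => J w i l * Rm w l j)) => l _.
  apply: has_grad_mul; [exact: frechet_comp HfJ (i, l) | exact: frechet_comp HfR (l, j)].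
- apply: (has_grad_ext (f := fun w => uncurry_map F w (i, lift ord0 j))) => //.
    by move=> w; rewrite Jmat_mul_R.
  exact: frechet_comp HfF (i, lift ord0 j).
Qed.

Lemma DJ_formula (DF : X n -> ('I_m * 'I_n.+1)%type -> 'I_n.+1 -> R)
    (DR : X n -> ('I_n * 'I_n)%type -> 'I_n.+1 -> R) z :
  (forall i j d, rsum (fun l => J z i l * DR z (l, j) d + Rm z l j * DJ z (i, l) d) =
    DF z (i, lift ord0 j) d) ->
  forall i l' d, DJ z (i, l') d =
    rsum (fun j => (DF z (i, lift ord0 j) d - rsum (fun l => J z i l * DR z (l, j) d)) * Rinv z j l').
Proof.
move=> Hid i l' d.
rewrite (rsum_ext (g := fun j => rsum (fun l => DJ z (i, l) d * (Rm z l j * Rinv z j l')))); last first.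
  move=> j; rewrite -(Hid i j d) rsum_add.
  set S := rsum (fun l => J z i l * DR z (l, j) d).
  rewrite (_ : S + _ - S = rsum (fun l => Rm z l j * DJ z (i, l) d)); last ring.
  by rewrite -rsum_scalr; apply: rsum_ext => l; ring.
rewrite rsum_exchange (rsum_ext (g := fun l => if l == l' then DJ z (i, l) d else 0)).
  by rewrite rsum_delta.
move=> l; rewrite rsum_scal.
have := congr1 (fun M => M l l') (proj1 (Hinv z)); rewrite /matmul /idm => ->.
by case: eqP => _; ring.
Qed.

Lemma DJ_cont (y : X n) d0 :
  reg_at Defs.C1 (uncurry_map F) y -> reg_at Defs.C1 (uncurry_map Rm) y -> 0 < d0 ->
  (forall z, norm (vsub z y) < d0 -> frechet (uncurry_map J) z (DJ z)) ->
  forall p d, scont (fun z => DJ z p d) y.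
Proof.
move=> [rF [DF [HrF [HfF HcF]]]] [rR [DR [HrR [HfR HcR]]]] Hd0 HfJ [i l'] d.
set dl := Rmin d0 (Rmin rF rR).
have Hdl : 0 < dl by rewrite /dl; repeat apply: Rmin_pos.
have Hnear z : norm (vsub z y) < dl ->
    norm (vsub z y) < d0 /\ norm (vsub z y) < rF /\ norm (vsub z y) < rR.
  have := Rmin_l d0 (Rmin rF rR); have := Rmin_r d0 (Rmin rF rR).
  by have := Rmin_l rF rR; have := Rmin_r rF rR; rewrite -/dl; lra.
have Hy0 : norm (vsub y y) < d0 by rewrite norm_self.
apply: (scont_ext_loc (g := fun z => rsum (fun j =>
  (DF z (i, lift ord0 j) d - rsum (fun l => J z i l * DR z (l, j) d)) * Rinv z j l')) Hdl).
  move=> z /Hnear [Hz1 [Hz2 Hz3]]; apply: DJ_formula.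
  by apply: DJ_identity; [apply: HfJ | apply: HfF | apply: HfR].
have HRc a b : scont (fun z => Rm z a b) y.
  by apply: (has_grad_cont (a := DR y (a, b))); apply: frechet_comp (HfR y _) (a, b); rewrite norm_self.
apply: (@scont_big _ _ _ _ (fun j z =>
  (DF z (i, lift ord0 j) d - rsum (fun l => J z i l * DR z (l, j) d)) * Rinv z j l')) => j _.
apply: scont_mul; last exact: inv_cont Hinv HRc j l'.
apply: (scont_ext_loc (g := fun z => DF z (i, lift ord0 j) d +
  -1 * rsum (fun l => J z i l * DR z (l, j) d)) Hdl) => [z _|]; first ring.
apply: scont_add; first exact: cont_at_comp HcF ((i, lift ord0 j), d).
apply: scont_mul; first exact: scont_const.
apply: (@scont_big _ _ _ _ (fun l z => J z i l * DR z (l, j) d)) => l _.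
apply: scont_mul; last exact: cont_at_comp HcR ((l, j), d).
by apply: (has_grad_cont (a := DJ y (i, l))); apply: frechet_comp (HfJ y Hy0) (i, l).
Qed.

End JacobianDerivative.

Lemma least_witness (P : nat -> Prop) : (exists k, P k) ->
  exists k, P k /\ forall j, (j < k)%N -> ~ P j.
Proof.
move=> [k Hk]; elim: k {-2}k (leqnn k) Hk => [|N IH] k Hle Pk.
  by exists k; split => // j; move: Hle; rewrite leqn0 => /eqP ->.
case: (classic (exists j, (j < k)%N /\ P j)) => [[j [Hj Pj]] | Hno].
  by apply: (IH j) => //; rewrite -ltnS; apply: leq_trans Hj Hle.
by exists k; split => // j Hj Pj; apply: Hno; exists j.
Qed.

Section Lemma15.
Variables (cls : reg_class) (m n : nat).
Variable F : X n -> 'I_m -> 'I_n.+1 -> R.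
Variables Rm Rinv : X n -> 'I_n -> 'I_n -> R.
Variable x0 : X n.
Notation J := (Jmat F Rinv).
Notation row := (fun y => rows_of (J y)).
Let cf := cls = Defs.C1.

Lemma rows_of_out y i : (m <= i)%N -> forall c, row y i c = 0.
Proof. by move=> Hi c; rewrite /rows_of insubF // ltnNge Hi. Qed.

(* Under the hypotheses of the theorem every entry of J is c1lp near x0; the
   C^1 case uses the continuity of DJ. *)
Lemma rows_c1lp rho (DJ : X n -> ('I_m * 'I_n)%type -> 'I_n.+1 -> R) :
  (forall x, matmul (Rm x) (Rinv x) = idm n /\ matmul (Rinv x) (Rm x) = idm n) ->
  (forall x, reg_at cls (uncurry_map F) x /\ reg_at cls (uncurry_map Rm) x) ->
  0 < rho -> (forall x, norm (vsub x x0) < rho -> frechet (uncurry_map J) x (DJ x)) ->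
  reg_at CLp (uncurry_map DJ) x0 ->
  exists r0, 0 < r0 /\ forall i j, c1lp cf x0 r0 (fun y => row y i j).
Proof.
move=> HRinv Hcont Hrho HfJ [rL [KL [HrL [HKL HLp]]]].
have HC1 : cf -> forall y, norm (vsub y x0) < rho -> forall p d, scont (fun z => DJ z p d) y.
  move=> Hc y Hy p d; have [HF HR] := Hcont y; rewrite /cf in Hc; rewrite Hc in HF HR.
  apply: (DJ_cont HRinv HF HR (d0 := rho - norm (vsub y x0))); first lra.
  by move=> z Hz; apply: HfJ; have := norm_vsub_triang z y x0; lra.
exists (Rmin (rho / 2) rL); split; first by apply: Rmin_pos; lra.
move=> i j; case Hi : (i < m)%N; last first.
  by apply: (c1lp_ext (f := fun _ => 0)) (c1lp_const _ _ _ _) => y; rewrite rows_of_out // leqNgt Hi.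
pose o := Ordinal Hi.
apply: (c1lp_ext (f := fun y => J y o j)); first by move=> y; rewrite /rows_of insubT.
apply: (c1lp_of_grad (Df := fun y d => DJ y (o, j) d) (KL := KL)) => //.
- by move=> y Hy; apply: frechet_comp (HfJ y Hy) (o, j).
- move=> y Hy d; apply: Rle_trans (HLp y Hy).
  by have := comp_le_norm (vsub (uncurry_map DJ y) (uncurry_map DJ x0)) ((o, j), d).
- by move=> Hc y Hy d; apply: HC1.
Qed.

Variable r0 : R.
Hypothesis Hr0 : 0 < r0.
Hypothesis Hrow : forall i j, c1lp cf x0 r0 (fun y => row y i j).

(* Case 1: a is the first vanishing pivot at x0.  Then c_aa ĵ_a = v_a is
   c1lp and vanishes at x0, which gives (ii) and (iii). *)
Lemma first_vanishing_pivot (a : nat) :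
  norm (vGS (row x0) a) = 0 -> (forall k, (k < a)%N -> 0 < norm (vGS (row x0) k)) ->
  exists rr L, 0 < rr /\ 0 < L /\
    let g := fun x c => cGS (row x) a a * jhat (row x) a c in
    (forall x, norm (vsub x x0) <= rr -> reg_at C1p g x) /\
    (forall A, frechet g x0 A -> forall x, norm (vsub x x0) <= rr ->
       norm (vsub (g x) (lapply A (vsub x x0))) <= L * (norm (vsub x x0)) ^ 2).
Proof.
move=> Ha0 Hpos.
have [rr [cmin HC]] := pivots_regular_near Hrow Hr0 Hpos.
have [Hrr _] := HC.
pose g := fun x c => cGS (row x) a a * jhat (row x) a c.
have Hg c : c1lp cf x0 rr (fun y => g y c).
  by apply: (c1lp_ext (f := fun y => vGS (row y) a c)) (residual_c1lp Hrow HC c) => y; rewrite /g cv_eq.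
have Hg0 c : g x0 c = 0 by rewrite /g cv_eq (norm_eq0 Ha0).
have [Ds [Ks HDK]] := c1lp_choice Hg.
have [L [HL Hquad]] := c1lp_family_quadratic Hrr HDK Hg0.
exists rr, L; split => //; split => //; split; last exact: Hquad.
by move=> x Hx; exists (fun c d => Ds c x d); apply: c1lp_family_frechet HDK x Hx.
Qed.

(* Case 2: all pivots below m are positive at x0.  Then every Gram–Schmidt
   coefficient, hence every block C_aa Ĵ_a, is c1lp near x0, and x0 is
   interior to G_S. *)
Lemma regular_pivots_interior (ms : list nat) :
  (forall k, (k < m)%N -> 0 < norm (vGS (row x0) k)) -> in_interior (inG cls ms J) x0.
Proof.
move=> Hpos.
have [rr [c HC]] := pivots_regular_near Hrow Hr0 Hpos.
have [Hrr [Hrr0 [Hc HCk]]] := HC.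
have GJ k j : c1lp cf x0 rr (fun y => jhat (row y) k j).
  case Hk : (k < m)%N; first by have [_ H] := HCk k Hk; apply: H.
  apply: (c1lp_ext (f := fun _ => 0)) (c1lp_const _ _ _ _) => y.
  by rewrite jhat_zero //; apply: rows_of_out; rewrite leqNgt Hk.
have GC i k : c1lp cf x0 rr (fun y => cGS (row y) i k).
  case: (ltngtP k i) => Hki.
  - apply: (c1lp_ext (f := fun y => dot (jhat (row y) k) (row y i))) => [y|].
      by rewrite cGS_lt.
    by apply: c1lp_dot => // j; apply: c1lp_mono Hrr0 (Hrow i j).
  - by apply: (c1lp_ext (f := fun _ => 0)) (c1lp_const _ _ _ _) => y; rewrite cGS_gt.
  - rewrite Hki; case Hi : (i < m)%N.
      apply: (c1lp_ext (f := fun y => norm (vGS (row y) i))) (pivot_c1lp Hrow HC Hi) => y.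
      by rewrite cGS_diag.
    apply: (c1lp_ext (f := fun _ => 0)) (c1lp_const _ _ _ _) => y.
    by rewrite cdiag_zero //; apply: rows_of_out; rewrite leqNgt Hi.
exists (rr / 2); split => [|x Hx a Ha]; first lra.
have [Ds [Ks HDK]] : exists Ds Ks, forall p,
    c1lp_with cf x0 rr (fun y => CJ_block ms J a y p) (Ds p) (Ks p).
  apply: c1lp_choice => -[p1 p2]; rewrite /CJ_block /rsum /=.
  apply: (@c1lp_big _ _ _ _ _ _ _ (fun (k : 'I_(blk_size ms a)) y =>
    cGS (row y) (blk_off ms a + p1) (blk_off ms a + k) * jhat (row y) (blk_off ms a + k) p2)) => k _.
  by apply: c1lp_mul.
by apply: (c1lp_family_reg Hrr HDK).
Qed.

End Lemma15.

Theorem lemma15 (cls : reg_class) (m n : nat) (ms : list nat)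
  (Hl : (2 <= length ms)%N)
  (Hms : Forall (fun k => (1 <= k)%N) ms)
  (Hm : m = list_sum ms) (Hmn : (m <= n)%N)
  (F : X n -> 'I_m -> 'I_n.+1 -> R)
  (Rm Rinv : X n -> 'I_n -> 'I_n -> R)
  (r : X n -> 'I_m -> R)
  (HRinv : forall x, matmul (Rm x) (Rinv x) = idm n /\ matmul (Rinv x) (Rm x) = idm n)
  (Hcont : kin_cont cls F Rm r)
  (x0 : X n)
  (Hx0 : ~ in_interior (inG cls ms (Jmat F Rinv)) x0)
  (HJ : exists rho (DJ : X n -> ('I_m * 'I_n)%type -> 'I_n.+1 -> R), 0 < rho /\
          (forall x, norm (vsub x x0) < rho -> frechet (uncurry_map (Jmat F Rinv)) x (DJ x)) /\
          reg_at C0 (uncurry_map DJ) x0 /\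
          reg_at CLp (uncurry_map DJ) x0) :
  exists (a : 'I_m) (rr L : R), 0 < rr /\ 0 < L /\
    let row := fun x => rows_of (Jmat F Rinv x) in
    let g := fun x c => cGS (row x) a a * jhat (row x) a c in
    cGS (row x0) a a = 0 /\
    (forall x, norm (vsub x x0) <= rr -> reg_at C1p g x) /\
    (forall A, frechet g x0 A ->
       forall x, norm (vsub x x0) <= rr ->
         norm (vsub (g x) (lapply A (vsub x x0))) <= L * (norm (vsub x x0))^2).
Proof.
have [rho [DJ [Hrho [HfJ [_ HLp]]]]] := HJ.
have HFR x : reg_at cls (uncurry_map F) x /\ reg_at cls (uncurry_map Rm) x.
  by have [HF [HR _]] := Hcont x.
have [r0 [Hr0 Hrow]] := rows_c1lp HRinv HFR Hrho HfJ HLp.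
set row0 := rows_of (Jmat F Rinv x0).
have Hpiv k : 0 <= norm (vGS row0 k) by apply: norm_ge0.
case: (classic (exists k, (k < m)%N /\ norm (vGS row0 k) = 0)) => [Hex | Hno].
-
  have [a [[Ha Ha0] Hmin]] := least_witness Hex.
  have Hpos k : (k < a)%N -> 0 < norm (vGS row0 k).
    move=> Hk; case: (Rle_lt_dec (norm (vGS row0 k)) 0) => // Hle.
    by case: (Hmin k Hk); split; [apply: ltn_trans Ha | have := Hpiv k; lra].
  have [rr [L [Hrr [HL [HC1p Hquad]]]]] := first_vanishing_pivot Hr0 Hrow Ha0 Hpos.
  by exists (Ordinal Ha), rr, L; do 2 split => //; split; first by rewrite cGS_diag.
- (* all pivots positive: x0 would be interior to G_S *)
  exfalso; apply/Hx0/(regular_pivots_interior Hr0 Hrow) => k Hk.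
  case: (Rle_lt_dec (norm (vGS row0 k)) 0) => // Hle.
  by case: Hno; exists k; split => //; have := Hpiv k; lra.
Qed.
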